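(* Let a chemical reaction network satisfying (H1) and (H2) consist of exactly $2N$ connected components which, for $i=1,\dots,N$, come in pairs \[ Y_i+S_{i,0}\rightleftarrows U_{i,1}\to\cdots\rightleftarrows U_{i,L_i}\to Y_i+S_{i,L_i},\qquad \widetilde Y_i+S_{i,L_i}\rightleftarrows V_{i,L_i}\to\widetilde Y_i+S_{i,L_i-1}\rightleftarrows\cdots\rightleftarrows V_{i,1}\to\widetilde Y_i+S_{i,0}, \] with rate constants $a_{i,j},b_{i,j},c_{i,j},\tilde a_{i,j},\tilde b_{i,j},\tilde c_{i,j}$ as in the context. Then the associated system is identifiable (all rate constants are identifiable) from $s_{1,L_1},\dots,s_{N,L_N}$, and for each $i$ it suffices to use $s_{i,L_i}^{(\ell)}$ with $1\le\ell\le\max\{2,2L_i-1\}$.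
   Context: Species are capital letters, concentrations lower-case letters. A chemical reaction network is a finite directed graph on complexes with reactions $y\to y'$ carrying rate constants $k_{yy'}>0$ (vector $\mathbf{k}$); mass-action system $\dot{\mathbf{x}}=\sum k_{yy'}\mathbf{x}^y(y'-y)$. Total derivative: $\dot\varphi=\sum_i\frac{\partial\varphi}{\partial x_i}\dot x_i$ with $\dot x_i$ replaced by the right-hand side; $\varphi^{(\ell)}$ the $\ell$-th iterate. A map $\psi$ of $\mathbf{k}$ is identifiable from $x_{i_1},\dots,x_{i_t}$ using orders $1\le\ell\le D$ if, for positive $\mathbf{k}^*,\mathbf{k}^{**}$, equality of $x_{i_j}^{(\ell)}(\mathbf{x},\mathbf{k}^* )$ and $x_{i_j}^{(\ell)}(\mathbf{x},\mathbf{k}^{**})$ as polynomials in $\mathbf{x}$ for all $1\le \ell\le D$ and all $j$ implies $\psi(\mathbf{k}^* )=\psi(\mathbf{k}^{**})$; the system is identifiable if this holds for $\psi=$ identity. (H1) Every connected component has the form $Y+S_0\rightleftarrows U_1\to\cdots\rightleftarrows U_L\to Y+S_L$ (reactions $Y+S_{j-1}\to U_j$, $U_j\to Y+S_{j-1}$, $U_j\to Y+S_j$), unique enzyme $Y$; intermediates distinct throughout the network; the non-intermediates of a component are pairwise distinct but may appear in other components; each complex in a unique component. $\mathscr{S}_U$ = substrates/products of the component of intermediate $U$. (H2) A partition $\mathscr{S}^{(0)}\sqcup\cdots\sqcup\mathscr{S}^{(M)}$ ($M\ge2$, nonempty parts, $\mathscr{S}^{(0)}$ the intermediates) such that for each intermediate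 $U$ with enzyme $Y$ there is $\alpha\ge1$ with $\mathscr{S}_U\subseteq\mathscr{S}^{(\alpha)}$, $Y\notin\mathscr{S}^{(\alpha)}$. Rates: $Y_i+S_{i,j-1}\to U_{i,j}$: $a_{i,j}$; $U_{i,j}\to Y_i+S_{i,j-1}$: $b_{i,j}$; $U_{i,j}\to Y_i+S_{i,j}$: $c_{i,j}$; $\widetilde Y_i+S_{i,j}\to V_{i,j}$: $\tilde a_{i,j}$; $V_{i,j}\to\widetilde Y_i+S_{i,j}$: $\tilde b_{i,j}$; $V_{i,j}\to\widetilde Y_i+S_{i,j-1}$: $\tilde c_{i,j}$. *)

From HB Require Import structures.
From mathcomp Require Import all_boot all_order all_algebra.
Set Implicit Arguments. Unset Strict Implicit. Unset Printing Implicit Defensive.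
Import Order.TTheory GRing.Theory Num.Theory.
Local Open Scope ring_scope.

(* Multivariate polynomials in the concentrations x_t (t : T, T a finite
   type of species), represented by their coefficient function on
   monomials (exponent vectors T -> nat). *)
Definition mpoly (T : Type) (R : Type) := (T -> nat) -> R.

Section Poly.
Variables (T : finType) (R : realFieldType).

Definition pvar (s : T) : mpoly T R :=
  fun m => if [forall t, m t == nat_of_bool (t == s)] then 1 else 0.

Definition pderiv (s : T) (p : mpoly T R) : mpoly T R :=
  fun m => (m s).+1%:R * p (fun t => (m t + nat_of_bool (t == s))%N).

Definition pmulmono (y : T -> nat) (p : mpoly T R) : mpoly T R :=
  fun m => if [forall t, (y t <= m t)%N] then p (fun t => (m t - y t)%N) else 0.

(* complexes as stoichiometric vectors *)
Definition cplx1 (x : T) : T -> nat := fun t => nat_of_bool (t == x).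
Definition cplx2 (x y : T) : T -> nat :=
  fun t => (nat_of_bool (t == x) + nat_of_bool (t == y))%N.

(* a reaction: (rate constant, reactant complex y, product complex y') *)
Definition reaction := (R * (T -> nat) * (T -> nat))%type.

(* total (Lie) derivative along the mass-action vector field
   dx/dt = sum_r k_r x^{y_r} (y'_r - y_r):
   phi' = sum_s (d phi / d x_s) * xdot_s *)
Definition totder (rx : seq reaction) (p : mpoly T R) : mpoly T R :=
  fun m => \sum_(r <- rx) \sum_(s : T)
     r.1.1 * ((r.2 s)%:R - (r.1.2 s)%:R) * pmulmono r.1.2 (pderiv s p) m.

Definition xder (rx : seq reaction) (l : nat) (s : T) : mpoly T R :=
  iter l (totder rx) (pvar s).
End Poly.

(* rate constants a,b,c (forward chains) and a~,b~,c~ (backward chains),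
   indexed by i : 'I_N and j (meaningful for 1 <= j <= L i) *)
Record rates (N : nat) (R : Type) := Rates {
  ka : 'I_N -> nat -> R; kb : 'I_N -> nat -> R; kc : 'I_N -> nat -> R;
  kat : 'I_N -> nat -> R; kbt : 'I_N -> nat -> R; kct : 'I_N -> nat -> R }.

Definition network (T : finType) (R : realFieldType) (N : nat)
  (L : 'I_N -> nat) (Y Yt : 'I_N -> T) (S U V : 'I_N -> nat -> T)
  (k : rates N R) : seq (reaction T R) :=
  flatten [seq flatten [seq
    [:: (ka k i j, cplx2 (Y i) (S i j.-1), cplx1 (U i j));
        (kb k i j, cplx1 (U i j), cplx2 (Y i) (S i j.-1));
        (kc k i j, cplx1 (U i j), cplx2 (Y i) (S i j));
        (kat k i j, cplx2 (Yt i) (S i j), cplx1 (V i j));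
        (kbt k i j, cplx1 (V i j), cplx2 (Yt i) (S i j));
        (kct k i j, cplx1 (V i j), cplx2 (Yt i) (S i j.-1))]
    | j <- iota 1 (L i)] | i <- enum 'I_N].

Definition pos_rates (R : realFieldType) (N : nat) (L : 'I_N -> nat)
  (k : rates N R) : Prop :=
  forall i j, (1 <= j <= L i)%N ->
    [/\ 0 < ka k i j, 0 < kb k i j & 0 < kc k i j] /\
    [/\ 0 < kat k i j, 0 < kbt k i j & 0 < kct k i j].

Definition eq_rates (R : realFieldType) (N : nat) (L : 'I_N -> nat)
  (k1 k2 : rates N R) : Prop :=
  forall i j, (1 <= j <= L i)%N ->
    [/\ ka k1 i j = ka k2 i j, kb k1 i j = kb k2 i j & kc k1 i j = kc k2 i j] /\
    [/\ kat k1 i j = kat k2 i j, kbt k1 i j = kbt k2 i j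
      & kct k1 i j = kct k2 i j].

Definition is_inter (T : finType) (N : nat) (L : 'I_N -> nat)
  (U V : 'I_N -> nat -> T) (t : T) : Prop :=
  exists i j, (1 <= j <= L i)%N /\ (t = U i j \/ t = V i j).

Definition is_nonint (T : finType) (N : nat) (L : 'I_N -> nat)
  (Y Yt : 'I_N -> T) (S : 'I_N -> nat -> T) (t : T) : Prop :=
  exists i, t = Y i \/ t = Yt i \/ exists j, (j <= L i)%N /\ t = S i j.

(* enzyme of component (i, b): b = false forward chain, b = true backward *)
Definition enz (T : Type) (N : nat) (Y Yt : 'I_N -> T) (i : 'I_N) (b : bool) :=
  if b then Yt i else Y i.

Definition H1 (T : finType) (N : nat) (L : 'I_N -> nat)
  (Y Yt : 'I_N -> T) (S U V : 'I_N -> nat -> T) : Prop :=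
  [/\
      forall i, (0 < L i)%N,
      (forall i j i' j', (1 <= j <= L i)%N -> (1 <= j' <= L i')%N ->
         [/\ U i j = U i' j' -> i = i' /\ j = j',
             V i j = V i' j' -> i = i' /\ j = j' & U i j <> V i' j']),
      (forall t, is_inter L U V t -> ~ is_nonint L Y Yt S t) &
    [/\
      (forall i j j', (j <= L i)%N -> (j' <= L i)%N -> S i j = S i j' -> j = j'),
      (forall i j, (j <= L i)%N -> Y i <> S i j /\ Yt i <> S i j) &
      (forall i b i' b' j j', (j <= L i)%N -> (j' <= L i')%N -> (i, b) <> (i', b') ->
         cplx2 (enz Y Yt i b) (S i j) <> cplx2 (enz Y Yt i' b') (S i' j'))]].

(* (H2) for this network; the partition is given by part : T -> 'I_M.+1,
   part 0 being the set of intermediates *)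
Definition H2 (T : finType) (N : nat) (L : 'I_N -> nat)
  (Y Yt : 'I_N -> T) (S U V : 'I_N -> nat -> T) : Prop :=
  exists (M : nat) (part : T -> 'I_M.+1),
  [/\ (2 <= M)%N,
      (forall a : 'I_M.+1, exists t, part t = a),
      (forall t, val (part t) = 0%N <-> is_inter L U V t),
      (forall i j, (1 <= j <= L i)%N -> exists a : 'I_M.+1,
         [/\ (0 < val a)%N, (forall j', (j' <= L i)%N -> part (S i j') = a)
           & part (Y i) <> a]) &
      (forall i j, (1 <= j <= L i)%N -> exists a : 'I_M.+1,
         [/\ (0 < val a)%N, (forall j', (j' <= L i)%N -> part (S i j') = a)
           & part (Yt i) <> a])].

From HB Require Import structures.
From mathcomp Require Import all_boot all_order all_algebra.
From mathcomp Require Import ring zify.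
From Stdlib Require Import FunctionalExtensionality.
Import Order.TTheory GRing.Theory Num.Theory.
Set Implicit Arguments. Unset Strict Implicit. Unset Printing Implicit Defensive.
Local Open Scope ring_scope.

(* The coefficient of a monomial [x^m] in the [l]-th Lie derivative of [x_s] is
   a polynomial in the rate constants.  If integer weights are attached to the
   species so that each species changed by a reaction weighs at most one more
   than the reactant complex, every Lie derivative lowers the weight of the
   monomials by at most one, so this coefficient vanishes unless
   [w s <= w m + l].  On the boundary [w s = w m + l] only the reaction paths
   that lose exactly one unit of weight at each step contribute, and for
   weights adapted to a chain [i] this makes suitable coefficients computable
   in closed form: along the descent [S_L, U_L, S_(L-1) Y, U_(L-1) Y, ...] they
   are products of the [a_j] and [c_j], hence positive, and a few further
   coefficients of order at most [max 2 (2 L - 1)] are each an already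
   identified nonzero factor times an expression in one new rate constant.
   Comparing them for two positive rate vectors identifies all rate constants
   of chain [i]. *)

Lemma In_flatten (A : Type) (x : A) (ss : seq (seq A)) :
  List.In x (flatten ss) -> exists2 s, List.In s ss & List.In x s.
Proof.
elim: ss => [|s ss IH] //= h.
case: (List.in_app_or _ _ _ h) => [h'|/IH [s' h1 h2]]; first by exists s; [left|].
by exists s'; [right|].
Qed.

Lemma In_mem (A : eqType) (x : A) (s : seq A) : List.In x s -> x \in s.
Proof. by elim: s => [|y s IH] //= [->|/IH h]; rewrite inE ?eqxx ?h ?orbT. Qed.

Lemma big1_In (R : nmodType) (A : Type) (s : seq A) (F : A -> R) :
  (forall a, List.In a s -> F a = 0) -> \sum_(a <- s) F a = 0.
Proof.
elim: s => [|a s IH] h; first by rewrite big_nil.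
by rewrite big_cons h ?IH ?add0r //; [move=> b hb; apply: h; right|left].
Qed.

Lemma sum_neq0_In (R : nmodType) (A : Type) (s : seq A) (F : A -> R) :
  \sum_(a <- s) F a != 0 -> exists2 a, List.In a s & F a != 0.
Proof.
elim: s => [|a s IH]; first by rewrite big_nil eqxx.
rewrite big_cons; case: (eqVneq (F a) 0) => [-> | h _]; last by exists a; [left|].
by rewrite add0r => /IH [b h1 h2]; exists b; [right|].
Qed.

Lemma sumr_nseq (R : nmodType) (A : Type) (F : A -> R) n x :
  \sum_(y <- nseq n x) F y = F x *+ n.
Proof. by elim: n => [|n IH]; rewrite ?big_nil ?big_cons ?IH ?mulrS. Qed.

Section Monomials.
Variable T : finType.

Definition monom (xs : seq T) : T -> nat := fun t => count_mem t xs.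

Definition mle (y m : T -> nat) := [forall t, (y t <= m t)%N].

Definition mshift (m y : T -> nat) (s : T) : T -> nat :=
  fun t => (m t - y t + (t == s))%N.

Lemma monom_perm (xs ys : seq T) : perm_eq xs ys -> monom xs = monom ys.
Proof. by move=> /permP h; apply: functional_extensionality => t; rewrite /monom h. Qed.

Lemma cplx1_monom (x : T) : cplx1 x = monom [:: x].
Proof. by apply: functional_extensionality => t; rewrite /cplx1 /monom /= addn0 eq_sym. Qed.

Lemma cplx2_monom (x y : T) : cplx2 x y = monom [:: x; y].
Proof.
apply: functional_extensionality => t.
by rewrite /cplx2 /monom /= addn0 eq_sym (eq_sym y).
Qed.

Lemma cplx2C (a b : T) : cplx2 a b = cplx2 b a.
Proof. by apply: functional_extensionality => t; rewrite /cplx2 addnC. Qed.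

Lemma cplx2_inj (a b c d : T) : a != b -> cplx2 a b = cplx2 c d ->
  (a = c /\ b = d) \/ (a = d /\ b = c).
Proof.
move=> hab h.
have ha := congr1 (fun f => f a) h; have hb := congr1 (fun f => f b) h.
move: ha hb; rewrite /cplx2 /= eqxx (negbTE hab) (eq_sym b a) (negbTE hab) eqxx.
case: (eqVneq a c) => ac; case: (eqVneq a d) => ad;
case: (eqVneq b c) => bc; case: (eqVneq b d) => bd //=; subst;
rewrite ?eqxx ?(negbTE hab) //=; try by [left|right].
all: by move: hab; rewrite ?eqxx.
Qed.

Lemma monom_neq_mem (ys ys' : seq T) (s : T) :
  monom ys' s != monom ys s -> s \in ys' ++ ys.
Proof.
apply: contraR; rewrite mem_cat negb_or => /andP [h1 h2].
by rewrite /monom !(count_memPn _) ?eqxx.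
Qed.

Lemma count_mem_gt0 (x : T) xs : (0 < count_mem x xs)%N = (x \in xs).
Proof. by rewrite -has_count has_pred1. Qed.

Lemma mle_cplx1 (w : T) (xs : seq T) : mle (cplx1 w) (monom xs) = (w \in xs).
Proof.
apply/forallP/idP => [h|h t]; first by have := h w; rewrite /cplx1 eqxx /monom count_mem_gt0.
by rewrite /cplx1 /monom; case: eqP => [->|] //=; rewrite count_mem_gt0.
Qed.

Lemma mle_cplx2 (a b : T) (xs : seq T) : a != b ->
  mle (cplx2 a b) (monom xs) = (a \in xs) && (b \in xs).
Proof.
move=> hab; apply/forallP/andP => [h|[ha hb] t].
  have := h a; have := h b; rewrite /cplx2 !eqxx (negbTE hab) eq_sym (negbTE hab) /monom /=.
  by rewrite !count_mem_gt0 => -> ->.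
rewrite /cplx2 /monom; case: (eqVneq t a) => ta; case: (eqVneq t b) => tb; subst => //=;
  rewrite ?count_mem_gt0 //; by rewrite eqxx in hab.
Qed.

Lemma mshift_monom (xs ys zs : seq T) s : perm_eq xs (ys ++ zs) ->
  mshift (monom xs) (monom ys) s = monom (s :: zs).
Proof.
move=> /permP h; apply: functional_extensionality => t.
by rewrite /mshift /monom /= (h (pred1 t)) count_cat addKn addnC eq_sym.
Qed.

Lemma monom_subn (xs ys zs : seq T) s : perm_eq xs (ys ++ zs) ->
  (monom xs s - monom ys s)%N = count_mem s zs.
Proof. by move=> /permP h; rewrite /monom (h (pred1 s)) count_cat addKn. Qed.

Variable R : realFieldType.

Definition reaction_coef (r : reaction T R) (p : mpoly T R) (m : T -> nat) : R :=
  \sum_(s : T) r.1.1 * ((r.2 s)%:R - (r.1.2 s)%:R) * pmulmono r.1.2 (pderiv s p) m.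

Lemma totder_sum (rx : seq (reaction T R)) p m :
  totder rx p m = \sum_(r <- rx) reaction_coef r p m.
Proof. by []. Qed.

Lemma xderS (rx : seq (reaction T R)) l s : xder rx l.+1 s = totder rx (xder rx l s).
Proof. by []. Qed.

Lemma xder0_monom (rx : seq (reaction T R)) s : xder rx 0 s (monom [:: s]) = 1.
Proof.
rewrite /xder /= /pvar; case: forallP => // h; exfalso; apply: h => t.
by rewrite /monom /= addn0 (eq_sym s).
Qed.

Lemma reaction_coef_eq0 r p m : ~~ mle r.1.2 m -> reaction_coef r p m = 0.
Proof. by rewrite /mle => h; apply: big1 => s _; rewrite /pmulmono (negbTE h) mulr0. Qed.

Lemma reaction_coef_mle (kk : R) (y y' : T -> nat) p m :
  reaction_coef (kk, y, y') p m = if mle y m then reaction_coef (kk, y, y') p m else 0.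
Proof. by case: ifP => // /negbT h; rewrite reaction_coef_eq0. Qed.

Lemma sum_monom (xs : seq T) (X : T -> R) :
  \sum_(s : T) (monom xs s)%:R * X s = \sum_(x <- xs) X x.
Proof.
elim: xs => [|x xs IH]; first by rewrite big_nil; apply: big1 => s _; rewrite mul0r.
rewrite big_cons -IH /monom /=.
under eq_bigr do rewrite natrD mulrDl.
rewrite big_split /=; congr (_ + _).
rewrite (bigD1 x) //= eqxx mul1r big1 ?addr0 // => s /negbTE.
by rewrite eq_sym => ->; rewrite mul0r.
Qed.

Lemma reaction_coefE (r : reaction T R) p m ys ys' :
  r.1.2 = monom ys -> r.2 = monom ys' -> mle r.1.2 m ->
  reaction_coef r p m = r.1.1 *
    (\sum_(x <- ys') ((m x - r.1.2 x).+1%:R * p (mshift m r.1.2 x))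
   - \sum_(x <- ys) ((m x - r.1.2 x).+1%:R * p (mshift m r.1.2 x))).
Proof.
move=> hy hy'; rewrite /mle => hle; rewrite /reaction_coef /pmulmono hle.
rewrite -(sum_monom ys') -(sum_monom ys) -sumrB mulr_sumr; apply: eq_bigr => s _.
by rewrite /pderiv -hy -hy' -mulrBl !mulrA.
Qed.

Lemma reaction_coef_bind (kk : R) (E P W : T) p m :
  mle (monom [:: E; P]) m ->
  reaction_coef (kk, cplx2 E P, cplx1 W) p m =
  kk * ((m W - monom [:: E; P] W).+1%:R * p (mshift m (monom [:: E; P]) W)
     - ((m E - monom [:: E; P] E).+1%:R * p (mshift m (monom [:: E; P]) E)
      + (m P - monom [:: E; P] P).+1%:R * p (mshift m (monom [:: E; P]) P))).
Proof.
move=> h; rewrite (@reaction_coefE _ _ _ [:: E; P] [:: W]) /= ?cplx2_monom ?cplx1_monom //.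
by rewrite !big_cons !big_nil !addr0.
Qed.

Lemma reaction_coef_release (kk : R) (E P W : T) p m :
  mle (monom [:: W]) m ->
  reaction_coef (kk, cplx1 W, cplx2 E P) p m =
  kk * (((m E - monom [:: W] E).+1%:R * p (mshift m (monom [:: W]) E)
      + (m P - monom [:: W] P).+1%:R * p (mshift m (monom [:: W]) P))
      - (m W - monom [:: W] W).+1%:R * p (mshift m (monom [:: W]) W)).
Proof.
move=> h; rewrite (@reaction_coefE _ _ _ [:: W] [:: E; P]) /= ?cplx2_monom ?cplx1_monom //.
by rewrite !big_cons !big_nil !addr0.
Qed.

Lemma shift_termE (xs ys zs : seq T) s (p : mpoly T R) : perm_eq xs (ys ++ zs) ->
  (monom xs s - monom ys s).+1%:R * p (mshift (monom xs) (monom ys) s) =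
  (count_mem s zs).+1%:R * p (monom (s :: zs)).
Proof. by move=> h; rewrite (mshift_monom _ h) (monom_subn _ h). Qed.

Section Weight.
Variable w : T -> int.

Definition mweight (m : T -> nat) : int := \sum_(t : T) (m t)%:Z * w t.

(* Along a reaction, the Lie derivative trades a factor [x_s], for a species
   [s] that the reaction changes, for the reactant monomial; this condition
   says that such a trade lowers the weight of a monomial by at most one. *)
Definition weight_admissible (rx : seq (reaction T R)) :=
  forall r, List.In r rx -> forall s, r.2 s != r.1.2 s -> w s <= mweight r.1.2 + 1.

Lemma mweight_monom xs : mweight (monom xs) = \sum_(x <- xs) w x.
Proof.
elim: xs => [|x xs IH]; first by rewrite big_nil; apply: big1 => s _; rewrite mul0r.
rewrite big_cons -IH /mweight /monom /=.
under eq_bigr do rewrite PoszD mulrDl.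
rewrite big_split /=; congr (_ + _).
rewrite (bigD1 x) //= eqxx mul1r big1 ?addr0 // => s /negbTE.
by rewrite eq_sym => ->; rewrite mul0r.
Qed.

Lemma mweight_shift m y s : mle y m -> mweight (mshift m y s) = mweight m - mweight y + w s.
Proof.
move=> /forallP hle; rewrite /mweight /mshift.
have -> : \sum_(t : T) ((m t - y t + (t == s))%N)%:Z * w t =
   \sum_(t : T) ((m t)%:Z * w t - (y t)%:Z * w t + (t == s)%:Z * w t).
  by apply: eq_bigr => t _; rewrite PoszD -subzn ?hle // mulrDl mulrBl.
rewrite big_split sumrB /=; congr (_ + _).
by rewrite (bigD1 s) //= eqxx mul1r big1 ?addr0 // => t /negbTE ->; rewrite mul0r.
Qed.

Lemma xder_weight (rx : seq (reaction T R)) s0 : weight_admissible rx ->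
  forall l m, xder rx l s0 m != 0 -> w s0 <= mweight m + l%:Z.
Proof.
move=> hv; elim=> [|l IH] m.
  rewrite /xder /= /pvar; case: forallP => [h _|_]; last by rewrite eqxx.
  have -> : m = monom [:: s0].
    by apply: functional_extensionality => t; rewrite /monom /= addn0 eq_sym; exact/eqP/h.
  by rewrite mweight_monom big_seq1 addr0.
rewrite xderS totder_sum => /sum_neq0_In [r rin hr].
have hle : mle r.1.2 m by apply: contraNT hr => /reaction_coef_eq0 ->.
have [s _ hs] : exists2 s, s \in T & r.1.1 * ((r.2 s)%:R - (r.1.2 s)%:R) *
    pmulmono r.1.2 (pderiv s (xder rx l s0)) m != 0.
  apply/exists_inP; apply: contraNT hr => /exists_inPn h.
  by rewrite /reaction_coef big1 // => x _; apply/eqP/negPn/h.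
move: (hle) hs; rewrite /mle /pmulmono => hle'; rewrite hle' /pderiv !mulf_eq0 !negb_or =>
  /andP[/andP[_ hd] /andP[_ hp]].
have hrs : r.2 s != r.1.2 s by apply: contra hd => /eqP ->; rewrite subrr.
have := IH _ hp; have := hv r rin s hrs.
rewrite -/(mshift m r.1.2 s) mweight_shift // => h1 h2.
rewrite -addn1 PoszD; lia.
Qed.

Lemma shift_term_eq0 (rx : seq (reaction T R)) s0 l m y s : weight_admissible rx -> mle y m ->
  mweight m - mweight y + w s + l%:Z < w s0 ->
  (m s - y s).+1%:R * xder rx l s0 (mshift m y s) = 0.
Proof.
move=> hv hle hlt; suff -> : xder rx l s0 (mshift m y s) = 0 by rewrite mulr0.
apply/eqP; apply: contraTT hlt => /(xder_weight hv); rewrite mweight_shift // -leNgt; apply.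
Qed.

End Weight.
End Monomials.


Section Network.
Variables (R : realFieldType) (T : finType) (N : nat) (L : 'I_N -> nat)
  (Y Yt : 'I_N -> T) (S U V : 'I_N -> nat -> T).
Hypothesis hH1 : H1 L Y Yt S U V.
Hypothesis hH2 : H2 L Y Yt S U V.

Definition chain_reactions (k : rates N R) i j : seq (reaction T R) :=
    [:: (ka k i j, cplx2 (Y i) (S i j.-1), cplx1 (U i j));
        (kb k i j, cplx1 (U i j), cplx2 (Y i) (S i j.-1));
        (kc k i j, cplx1 (U i j), cplx2 (Y i) (S i j));
        (kat k i j, cplx2 (Yt i) (S i j), cplx1 (V i j));
        (kbt k i j, cplx1 (V i j), cplx2 (Yt i) (S i j));
        (kct k i j, cplx1 (V i j), cplx2 (Yt i) (S i j.-1))].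

Lemma sum_network k (F : reaction T R -> R) :
  \sum_(r <- network L Y Yt S U V k) F r =
  \sum_(i : 'I_N) \sum_(j <- iota 1 (L i)) \sum_(r <- chain_reactions k i j) F r.
Proof.
rewrite /network big_flatten big_map big_enum /=; apply: eq_bigr => i _.
by rewrite big_flatten big_map.
Qed.

Lemma In_network k r : List.In r (network L Y Yt S U V k) ->
  exists i j, (1 <= j <= L i)%N /\ List.In r (chain_reactions k i j).
Proof.
move=> h; have [s hs hr0] := In_flatten h.
have [i [ei _]] := proj1 (List.in_map_iff _ _ _) hs; subst s.
have [s' hs' hr] := In_flatten hr0.
have [j [ej hj]] := proj1 (List.in_map_iff _ _ _) hs'; subst s'.
exists i, j; split => //; move: (In_mem hj); rewrite mem_iota; lia.
Qed.

Lemma L_gt0 i : (0 < L i)%N. Proof. by case: hH1. Qed.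

Lemma inter_nonint_disjoint t : is_inter L U V t -> is_nonint L Y Yt S t -> False.
Proof. case: hH1 => _ _ h _; exact: h. Qed.

Lemma U_inj i j i' j' : (1 <= j <= L i)%N -> (1 <= j' <= L i')%N ->
  U i j = U i' j' -> i = i' /\ j = j'.
Proof. case: hH1 => _ h _ _ hj hj'; by case: (h _ _ _ _ hj hj'). Qed.
Lemma V_inj i j i' j' : (1 <= j <= L i)%N -> (1 <= j' <= L i')%N ->
  V i j = V i' j' -> i = i' /\ j = j'.
Proof. case: hH1 => _ h _ _ hj hj'; by case: (h _ _ _ _ hj hj'). Qed.
Lemma U_neq_V i j i' j' : (1 <= j <= L i)%N -> (1 <= j' <= L i')%N -> U i j <> V i' j'.
Proof. case: hH1 => _ h _ _ hj hj'; by case: (h _ _ _ _ hj hj'). Qed.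

Lemma S_inj i j j' : (j <= L i)%N -> (j' <= L i)%N -> S i j = S i j' -> j = j'.
Proof. by case: hH1 => _ _ _ [h _ _]; apply: h. Qed.
Lemma Y_neq_S i j : (j <= L i)%N -> Y i != S i j.
Proof. by case: hH1 => _ _ _ [_ h _] hj; apply/eqP; case: (h _ _ hj). Qed.
Lemma Yt_neq_S i j : (j <= L i)%N -> Yt i != S i j.
Proof. by case: hH1 => _ _ _ [_ h _] hj; apply/eqP; case: (h _ _ hj). Qed.
Lemma cplx2_enz_neq i b i' b' j j' : (j <= L i)%N -> (j' <= L i')%N -> (i, b) <> (i', b') ->
  cplx2 (enz Y Yt i b) (S i j) <> cplx2 (enz Y Yt i' b') (S i' j').
Proof. by case: hH1 => _ _ _ [_ _ h]; apply: h. Qed.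

Lemma enz_neq_S i b j : (j <= L i)%N -> enz Y Yt i b != S i j.
Proof. by move=> hj; case: b => /=; [apply: Yt_neq_S|apply: Y_neq_S]. Qed.

Lemma cplx2_enz_inj i b i' b' j j' : (j <= L i)%N -> (j' <= L i')%N ->
  cplx2 (enz Y Yt i b) (S i j) = cplx2 (enz Y Yt i' b') (S i' j') -> [/\ i = i', b = b' & j = j'].
Proof.
move=> hj hj' h.
case: (eqVneq (i, b) (i', b')) => [e|hne]; last by case: (cplx2_enz_neq hj hj' (elimN eqP hne)).
case: e h hj' => <- <- h hj'.
split => //; case: (cplx2_inj (enz_neq_S b hj) h) => [[_ h2]|[h1 h2]]; first exact: S_inj hj hj' h2.
by case: (elimN eqP (enz_neq_S b hj)); rewrite h2.
Qed.

Lemma U_inter i j : (1 <= j <= L i)%N -> is_inter L U V (U i j).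
Proof. by move=> hj; exists i, j; split => //; left. Qed.
Lemma V_inter i j : (1 <= j <= L i)%N -> is_inter L U V (V i j).
Proof. by move=> hj; exists i, j; split => //; right. Qed.
Lemma Y_nonint i : is_nonint L Y Yt S (Y i). Proof. by exists i; left. Qed.
Lemma Yt_nonint i : is_nonint L Y Yt S (Yt i). Proof. by exists i; right; left. Qed.
Lemma S_nonint i x : (x <= L i)%N -> is_nonint L Y Yt S (S i x).
Proof. by exists i; right; right; exists x. Qed.
Lemma enz_nonint i b : is_nonint L Y Yt S (enz Y Yt i b).
Proof. case: b; [exact: Yt_nonint|exact: Y_nonint]. Qed.

Lemma inter_neq_nonint t t' : is_inter L U V t -> is_nonint L Y Yt S t' -> t != t'.
Proof. by move=> h h'; apply/eqP => e; subst; exact: (inter_nonint_disjoint h h'). Qed.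

Lemma Y_neq_Yt i : Y i != Yt i.
Proof.
apply/eqP => e; have h0 : (0 <= L i)%N by [].
by apply: (cplx2_enz_neq (i:=i) (b:=false) (i':=i) (b':=true) h0 h0) => //=; rewrite e.
Qed.

Lemma enzyme_part : exists part : T -> nat,
  (forall i x y, (x <= L i)%N -> (y <= L i)%N -> part (S i x) = part (S i y)) /\
  (forall i b x, (x <= L i)%N -> part (enz Y Yt i b) <> part (S i x)).
Proof.
case: hH2 => M [part [_ _ _ hF hB]].
exists (fun t => val (part t)); split=> i.
  move=> x y hx hy; have h1 : (1 <= 1 <= L i)%N by rewrite leqnn L_gt0.
  by case: (hF _ _ h1) => a [_ h _]; rewrite (h _ hx) (h _ hy).
move=> b x hx; have h1 : (1 <= 1 <= L i)%N by rewrite leqnn L_gt0.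
case: b; [case: (hB _ _ h1)|case: (hF _ _ h1)] => a [_ h h'];
  by rewrite /= (h _ hx) => /val_inj.
Qed.

Definition chain_nonint i t := t = Y i \/ t = Yt i \/ exists2 y, (y <= L i)%N & t = S i y.

Lemma cplx2_chain i i' b' x : (x <= L i')%N ->
  chain_nonint i (enz Y Yt i' b') -> chain_nonint i (S i' x) ->
  ~ (enz Y Yt i' b' = Y i /\ S i' x = Yt i) -> ~ (enz Y Yt i' b' = Yt i /\ S i' x = Y i) ->
  i' = i.
Proof.
move=> hx hE hP n1 n2.
have [part [hp1 hp2]] := enzyme_part.
have hne := enz_neq_S b' hx.
case: hP => [eP|[eP|[y hy eP]]].
- case: hE => [eE|[eE|[z hz eE]]].
  + by move: hne; rewrite eE eP eqxx.
  + by case: n2.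
  + have h : cplx2 (enz Y Yt i' b') (S i' x) = cplx2 (enz Y Yt i false) (S i z).
      by rewrite eE eP cplx2C.
    by case: (cplx2_enz_inj hx hz h) => ->.
- case: hE => [eE|[eE|[z hz eE]]].
  + by case: n1.
  + by move: hne; rewrite eE eP eqxx.
  + have h : cplx2 (enz Y Yt i' b') (S i' x) = cplx2 (enz Y Yt i true) (S i z).
      by rewrite eE eP cplx2C.
    by case: (cplx2_enz_inj hx hz h) => ->.
- case: hE => [eE|[eE|[z hz eE]]].
  + have h : cplx2 (enz Y Yt i' b') (S i' x) = cplx2 (enz Y Yt i false) (S i y) by rewrite eE eP.
    by case: (cplx2_enz_inj hx hy h) => ->.
  + have h : cplx2 (enz Y Yt i' b') (S i' x) = cplx2 (enz Y Yt i true) (S i y) by rewrite eE eP.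
    by case: (cplx2_enz_inj hx hy h) => ->.
  + exfalso; apply: (hp2 _ b' _ hx).
    by rewrite eE eP (hp1 _ _ _ hz hy).
Qed.

Section Chain.
Variable i : 'I_N.

Definition S_index t : option nat := omap val [pick x : 'I_(L i).+1 | t == S i x].
Definition U_index t : option nat := omap val [pick x : 'I_(L i).+1 | (0 < x)%N && (t == U i x)].
Definition V_index t : option nat := omap val [pick x : 'I_(L i).+1 | (0 < x)%N && (t == V i x)].

Lemma S_index_S x : (x <= L i)%N -> S_index (S i x) = Some x.
Proof.
move=> hx; rewrite /S_index; case: pickP => [y /eqP e|h] /=.
  by rewrite (S_inj hx _ e) // -ltnS ltn_ord.
by have := h (Ordinal (hx : x < (L i).+1)%N); rewrite eqxx.
Qed.
Lemma S_index_Some t x : S_index t = Some x -> t = S i x /\ (x <= L i)%N.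
Proof.
rewrite /S_index; case: pickP => [y /eqP e|h] //= [<-]; split => //; by rewrite -ltnS ltn_ord.
Qed.
Lemma U_index_U x : (1 <= x <= L i)%N -> U_index (U i x) = Some x.
Proof.
move=> hx; rewrite /U_index; case: pickP => [y /andP[y0 /eqP e]|h] /=.
  have hy : (1 <= y <= L i)%N by rewrite y0 -ltnS ltn_ord.
  by case: (U_inj hx hy e) => _ ->.
have hx' : (x < (L i).+1)%N by case/andP: hx.
by have := h (Ordinal hx'); rewrite eqxx /=; case/andP: hx => ->.
Qed.
Lemma U_index_Some t x : U_index t = Some x -> t = U i x /\ (1 <= x <= L i)%N.
Proof.
rewrite /U_index; case: pickP => [y /andP[y0 /eqP e]|h] //= [<-].
by split => //; rewrite y0 -ltnS ltn_ord.
Qed.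
Lemma V_index_V x : (1 <= x <= L i)%N -> V_index (V i x) = Some x.
Proof.
move=> hx; rewrite /V_index; case: pickP => [y /andP[y0 /eqP e]|h] /=.
  have hy : (1 <= y <= L i)%N by rewrite y0 -ltnS ltn_ord.
  by case: (V_inj hx hy e) => _ ->.
have hx' : (x < (L i).+1)%N by case/andP: hx.
by have := h (Ordinal hx'); rewrite eqxx /=; case/andP: hx => ->.
Qed.
Lemma V_index_Some t x : V_index t = Some x -> t = V i x /\ (1 <= x <= L i)%N.
Proof.
rewrite /V_index; case: pickP => [y /andP[y0 /eqP e]|h] //= [<-].
by split => //; rewrite y0 -ltnS ltn_ord.
Qed.
Lemma S_index_inter t : is_inter L U V t -> S_index t = None.
Proof.
move=> ht; case e: (S_index t) => [x|] //; case: (S_index_Some e) => e' hx.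
by case: (inter_nonint_disjoint ht); rewrite e'; exact: S_nonint.
Qed.
Lemma U_index_V x : (1 <= x <= L i)%N -> U_index (V i x) = None.
Proof.
move=> hx; case e: (U_index _) => [y|] //; case: (U_index_Some e) => e' hy.
by case: (U_neq_V hy hx).
Qed.

(* An injective code for the species of chain [i], all other species being
   sent to [(0, 0)]: membership of chain species in an explicit list then
   reduces to a computation on pairs of numbers. *)
Definition label t : nat * nat :=
  if t == Y i then (1, 0)%N else if t == Yt i then (2, 0)%N else
  match S_index t with Some x => (3, x)%N | None =>
  match U_index t with Some x => (4, x)%N | None =>
  match V_index t with Some x => (5, x)%N | None => (0, 0)%N end end end.

Definition unlabel (p : nat * nat) : T :=
  match p.1 with 1 => Y i | 2 => Yt i | 3 => S i p.2 | 4 => U i p.2 | _ => V i p.2 end.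

Lemma labelK t : label t != (0, 0)%N -> unlabel (label t) = t.
Proof.
rewrite /label; case: (eqVneq t (Y i)) => [->|_] //; case: (eqVneq t (Yt i)) => [->|_] //=.
case e: (S_index t) => [x|]; first by case: (S_index_Some e) => ->.
case e': (U_index t) => [x|]; first by case: (U_index_Some e') => ->.
case e'': (V_index t) => [x|] //; by case: (V_index_Some e'') => ->.
Qed.

Lemma label_inj t t' : label t != (0, 0)%N -> label t = label t' -> t = t'.
Proof. move=> h e; by rewrite -(labelK h) e labelK // -e. Qed.

Lemma label_Y : label (Y i) = (1, 0)%N. Proof. by rewrite /label eqxx. Qed.
Lemma label_Yt : label (Yt i) = (2, 0)%N.
Proof. by rewrite /label eq_sym (negbTE (Y_neq_Yt i)) eqxx. Qed.
Lemma label_S x : (x <= L i)%N -> label (S i x) = (3, x)%N.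
Proof.
move=> hx; rewrite /label.
have /negbTE -> : S i x != Y i by rewrite eq_sym Y_neq_S.
have /negbTE -> : S i x != Yt i by rewrite eq_sym Yt_neq_S.
by rewrite S_index_S.
Qed.
Lemma label_U x : (1 <= x <= L i)%N -> label (U i x) = (4, x)%N.
Proof.
move=> hx; rewrite /label.
rewrite (negbTE (inter_neq_nonint (U_inter hx) (Y_nonint i))).
rewrite (negbTE (inter_neq_nonint (U_inter hx) (Yt_nonint i))).
by rewrite S_index_inter ?U_index_U //; exact: U_inter.
Qed.
Lemma label_V x : (1 <= x <= L i)%N -> label (V i x) = (5, x)%N.
Proof.
move=> hx; rewrite /label.
rewrite (negbTE (inter_neq_nonint (V_inter hx) (Y_nonint i))).
rewrite (negbTE (inter_neq_nonint (V_inter hx) (Yt_nonint i))).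
by rewrite S_index_inter ?U_index_V ?V_index_V //; exact: V_inter.
Qed.

Lemma mem_label t (xs : seq T) : label t != (0, 0)%N ->
  (t \in xs) = (label t \in map label xs).
Proof.
move=> h; elim: xs => [|x xs IH] //=; rewrite !inE IH; congr (_ || _).
apply/eqP/eqP => [->|e] //; exact: label_inj h e.
Qed.

(* The role of a non-intermediate in chain [i]; the weights below depend on a
   non-intermediate only through its class. *)
Inductive sclass := CY | CYt | CS of nat | COther.
Definition sclass_of t := if t == Y i then CY else if t == Yt i then CYt else
  if S_index t is Some x then CS x else COther.
Definition sclass_ok c := if c is CS x then (x <= L i)%N else true.
Definition is_substrate c := if c is CS _ then true else false.
Definition is_enzyme c := match c with CY | CYt => true | _ => false end.
(* By (H1) and (H2), these are the only class patterns that the enzyme and two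
   substrates of a component of another chain can exhibit. *)
Definition foreign_allowed cE cP cQ := match cE with
  | CY => [&& ~~ is_substrate cP, (if cP is CY then false else true), ~~ is_substrate cQ &
              (if cQ is CY then false else true)]
  | CYt => [&& ~~ is_substrate cP, (if cP is CYt then false else true), ~~ is_substrate cQ &
              (if cQ is CYt then false else true)]
  | CS _ => ~~ is_substrate cP && ~~ is_substrate cQ
  | COther => ~~ (is_substrate cP && is_enzyme cQ) && ~~ (is_enzyme cP && is_substrate cQ) end.

Lemma sclass_of_Y : sclass_of (Y i) = CY. Proof. by rewrite /sclass_of eqxx. Qed.
Lemma sclass_of_Yt : sclass_of (Yt i) = CYt.
Proof. by rewrite /sclass_of eq_sym (negbTE (Y_neq_Yt i)) eqxx. Qed.
Lemma sclass_of_S x : (x <= L i)%N -> sclass_of (S i x) = CS x.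
Proof.
move=> hx; rewrite /sclass_of.
have /negbTE -> : S i x != Y i by rewrite eq_sym Y_neq_S.
have /negbTE -> : S i x != Yt i by rewrite eq_sym Yt_neq_S.
by rewrite S_index_S.
Qed.
Lemma sclass_ofP t : [/\ sclass_of t = CY -> t = Y i, sclass_of t = CYt -> t = Yt i &
   forall x, sclass_of t = CS x -> t = S i x /\ (x <= L i)%N].
Proof.
rewrite /sclass_of; case: (eqVneq t (Y i)) => [->|_] //; case: (eqVneq t (Yt i)) => [->|_] //.
case e: (S_index t) => [x|] //; split => // y [<-]; exact: S_index_Some.
Qed.
Lemma sclass_of_ok t : sclass_ok (sclass_of t).
Proof.
rewrite /sclass_of; case: ifP => _ //; case: ifP => _ //.
by case e: (S_index t) => [x|] //=; case: (S_index_Some e).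
Qed.

Lemma sclass_chain_nonint t : is_substrate (sclass_of t) || is_enzyme (sclass_of t) ->
  chain_nonint i t.
Proof.
case: (sclass_ofP t) => h1 h2 h3; case e: (sclass_of t) => [| |x|] //= _.
- by left; exact: h1.
- by right; left; exact: h2.
- by right; right; case: (h3 _ e) => -> hx; exists x.
Qed.

Lemma S_neq_enzymes y : (y <= L i)%N -> S i y <> Y i /\ S i y <> Yt i.
Proof. by move=> hy; split; apply/eqP; rewrite eq_sym; [apply: Y_neq_S|apply: Yt_neq_S]. Qed.

Lemma foreign_enzyme_substrate i' b' z : (z <= L i')%N -> i' != i ->
  is_substrate (sclass_of (enz Y Yt i' b')) || is_enzyme (sclass_of (enz Y Yt i' b')) ->
    is_substrate (sclass_of (S i' z)) -> False.
Proof.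
move=> hz hi hE hP.
have hP' : chain_nonint i (S i' z) by apply: sclass_chain_nonint; rewrite hP.
case: (sclass_ofP (S i' z)) => _ _ h3; move: hP; case eP: (sclass_of (S i' z)) => [| |y|] // _.
case: (h3 _ eP) => ey hy; have [n1 n2] := S_neq_enzymes hy.
move: hi; rewrite (cplx2_chain hz (sclass_chain_nonint hE) hP') ?eqxx //; rewrite ey; by case.
Qed.

Lemma foreign_substrate_enzyme i' b' z : (z <= L i')%N -> i' != i ->
  is_substrate (sclass_of (enz Y Yt i' b')) -> is_enzyme (sclass_of (S i' z)) -> False.
Proof.
move=> hz hi hE hP.
have hP' : chain_nonint i (S i' z) by apply: sclass_chain_nonint; rewrite hP orbT.
have hE' : chain_nonint i (enz Y Yt i' b') by apply: sclass_chain_nonint; rewrite hE.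
case: (sclass_ofP (enz Y Yt i' b')) => _ _ h3; move: hE; case eE: (sclass_of _) => [| |a|] // _.
case: (h3 _ eE) => ea ha; have [n1 n2] := S_neq_enzymes ha.
move: hi; rewrite (cplx2_chain hz hE' hP') ?eqxx //; rewrite ea; by case.
Qed.

Lemma foreign_same_class i' b' z : (z <= L i')%N ->
  (sclass_of (enz Y Yt i' b') = CY -> sclass_of (S i' z) = CY -> False) /\
  (sclass_of (enz Y Yt i' b') = CYt -> sclass_of (S i' z) = CYt -> False).
Proof.
move=> hz; case: (sclass_ofP (enz Y Yt i' b')) => e1 e2 _; case: (sclass_ofP (S i' z)) => p1 p2 _.
split => h h'; apply: (elimN eqP (enz_neq_S b' hz)).
  by rewrite (e1 h) (p1 h').
by rewrite (e2 h) (p2 h').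
Qed.

Lemma foreign_substrates i' x x' : (x <= L i')%N -> (x' <= L i')%N ->
  is_substrate (sclass_of (S i' x)) -> is_enzyme (sclass_of (S i' x')) -> False.
Proof.
move=> hx hx' hP hQ.
have [part [hp1 hp2]] := enzyme_part.
case: (sclass_ofP (S i' x)) => _ _ h3; move: hP; case eP: (sclass_of (S i' x)) => [| |y|] // _.
case: (h3 _ eP) => ey hy.
case: (sclass_ofP (S i' x')) => q1 q2 _; move: hQ; case eQ: (sclass_of (S i' x')) => [| | |] // _.
- apply: (hp2 i false y hy); by rewrite /= -(q1 eQ) -ey (hp1 _ _ _ hx' hx).
- apply: (hp2 i true y hy); by rewrite /= -(q2 eQ) -ey (hp1 _ _ _ hx' hx).
Qed.

Lemma foreign_allowed_classes i' b' x x' : (x <= L i')%N -> (x' <= L i')%N -> i' != i ->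
  foreign_allowed (sclass_of (enz Y Yt i' b')) (sclass_of (S i' x)) (sclass_of (S i' x')).
Proof.
move=> hx hx' hi.
have A1 := foreign_enzyme_substrate hx hi (b':=b').
have A2 := foreign_enzyme_substrate hx' hi (b':=b').
have B1 := foreign_substrate_enzyme hx hi (b':=b').
have B2 := foreign_substrate_enzyme hx' hi (b':=b').
have [C1 C1'] := foreign_same_class b' hx; have [C2 C2'] := foreign_same_class b' hx'.
have D1 := foreign_substrates hx hx'; have D2 := foreign_substrates hx' hx.
case eE: (sclass_of _) A1 A2 B1 B2 C1 C1' C2 C2' => [| |a|] /= A1 A2 B1 B2 C1 C1' C2 C2'.
- apply/and4P; split.
  + by apply/negP => h; exact: (A1 isT h).
  + by case e: (sclass_of (S i' x)) => //; case: (C1 (erefl _) e).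
  + by apply/negP => h; exact: (A2 isT h).
  + by case e: (sclass_of (S i' x')) => //; case: (C2 (erefl _) e).
- apply/and4P; split.
  + by apply/negP => h; exact: (A1 isT h).
  + by case e: (sclass_of (S i' x)) => //; case: (C1' (erefl _) e).
  + by apply/negP => h; exact: (A2 isT h).
  + by case e: (sclass_of (S i' x')) => //; case: (C2' (erefl _) e).
- by apply/andP; split; apply/negP => h; [exact: (A1 isT h)|exact: (A2 isT h)].
- by apply/andP; split; apply/negP => /andP [h h']; [exact: D1 h h'|exact: D2 h' h].
Qed.

Section ChainWeight.
Variables (wy wt wo : int) (ws wu wv : nat -> int).

Definition class_weight c :=
  match c with CY => wy | CYt => wt | CS x => ws x | COther => wo end.
Definition nonint_weight t := class_weight (sclass_of t).
Definition index_bound := (\max_(i0 : 'I_N) L i0).+1.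

Definition U_pick t :=
  [pick p : 'I_N * 'I_index_bound | (1 <= p.2 <= L p.1)%N && (t == U p.1 p.2)].
Definition V_pick t :=
  [pick p : 'I_N * 'I_index_bound | (1 <= p.2 <= L p.1)%N && (t == V p.1 p.2)].
(* Intermediates of other chains weigh one more than the complex they are
   formed from; the reactions of other chains are then admissible as soon as
   the class weights are at least [-1] and satisfy [foreign_class_bound]. *)
Definition chain_weight t : int :=
  match U_pick t with
  | Some p => if p.1 == i then wu p.2
              else nonint_weight (Y p.1) + nonint_weight (S p.1 (p.2).-1) + 1
  | None => match V_pick t with
    | Some p => if p.1 == i then wv p.2
                else nonint_weight (Yt p.1) + nonint_weight (S p.1 p.2) + 1
    | None => nonint_weight t end end.

Lemma index_bound_gt i' j : (j <= L i')%N -> (j < index_bound)%N.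
Proof. move=> hj; rewrite /index_bound ltnS; apply: (leq_trans hj); exact: (leq_bigmax i'). Qed.

Lemma chain_weight_U i' j : (1 <= j <= L i')%N ->
  chain_weight (U i' j) =
    if i' == i then wu j else nonint_weight (Y i') + nonint_weight (S i' j.-1) + 1.
Proof.
move=> hj; rewrite /chain_weight /U_pick; case: pickP => [[a b] /= /andP [hb /eqP e]|h].
  case: (U_inj hj hb e) => e1 e2; subst; reflexivity.
have hb : (j < index_bound)%N by apply: (index_bound_gt (i' := i')); case/andP: hj => _ ->.
by have := h (i', Ordinal hb); rewrite /= hj eqxx.
Qed.

Lemma chain_weight_V i' j : (1 <= j <= L i')%N ->
  chain_weight (V i' j) =
    if i' == i then wv j else nonint_weight (Yt i') + nonint_weight (S i' j) + 1.
Proof.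
move=> hj; rewrite /chain_weight /U_pick; case: pickP => [[a b] /= /andP [hb /eqP e]|_].
  by case: (U_neq_V hb hj (esym e)).
rewrite /V_pick; case: pickP => [[a b] /= /andP [hb /eqP e]|h].
  case: (V_inj hj hb e) => e1 e2; subst; reflexivity.
have hb : (j < index_bound)%N by apply: (index_bound_gt (i' := i')); case/andP: hj => _ ->.
by have := h (i', Ordinal hb); rewrite /= hj eqxx.
Qed.

Lemma chain_weight_nonint t : is_nonint L Y Yt S t -> chain_weight t = nonint_weight t.
Proof.
move=> ht; rewrite /chain_weight /U_pick; case: pickP => [[a b] /= /andP [hb /eqP e]|_].
  by case: (inter_nonint_disjoint (U_inter hb)); rewrite -e.
rewrite /V_pick; case: pickP => [[a b] /= /andP [hb /eqP e]|_] //.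
by case: (inter_nonint_disjoint (V_inter hb)); rewrite -e.
Qed.

Hypothesis class_weight_ge : forall c, sclass_ok c -> -1 <= class_weight c.
Hypothesis U_weight_bounds : forall x, (1 <= x <= L i)%N ->
  [/\ wu x <= wy + ws x.-1 + 1, wy <= wu x + 1, ws x.-1 <= wu x + 1 & ws x <= wu x + 1].
Hypothesis V_weight_bounds : forall x, (1 <= x <= L i)%N ->
  [/\ wv x <= wt + ws x + 1, wt <= wv x + 1, ws x <= wv x + 1 & ws x.-1 <= wv x + 1].
Hypothesis foreign_class_bound : forall cE cP cQ, sclass_ok cE -> sclass_ok cP -> sclass_ok cQ ->
  foreign_allowed cE cP cQ ->
  class_weight cQ <= class_weight cE + class_weight cP + 2.

Lemma nonint_weight_ge t : -1 <= nonint_weight t.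
Proof. exact: class_weight_ge (sclass_of_ok t). Qed.

Lemma nonint_weight_Y : nonint_weight (Y i) = wy. Proof. by rewrite /nonint_weight sclass_of_Y. Qed.
Lemma nonint_weight_Yt : nonint_weight (Yt i) = wt.
Proof. by rewrite /nonint_weight sclass_of_Yt. Qed.
Lemma nonint_weight_S x : (x <= L i)%N -> nonint_weight (S i x) = ws x.
Proof. by move=> hx; rewrite /nonint_weight sclass_of_S. Qed.

Lemma foreign_weight_bound i' b' x x' : (x <= L i')%N -> (x' <= L i')%N -> i' != i ->
  nonint_weight (S i' x') <= nonint_weight (enz Y Yt i' b') + nonint_weight (S i' x) + 2.
Proof.
by move=> *; apply: foreign_class_bound; rewrite ?sclass_of_ok //; apply: foreign_allowed_classes.
Qed.

Lemma chain_weight_admissible (k : rates N R) :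
  weight_admissible chain_weight (network L Y Yt S U V k).
Proof.
move=> r /In_network [i' [j' [hj hin]]] s.
have hj1 : (j'.-1 <= L i')%N by case/andP: hj => _ h; apply: leq_trans h; exact: leq_pred.
have hj2 : (j' <= L i')%N by case/andP: hj.
have hY := chain_weight_nonint (Y_nonint i'); have hYt := chain_weight_nonint (Yt_nonint i').
have hS1 := chain_weight_nonint (S_nonint hj1); have hS2 := chain_weight_nonint (S_nonint hj2).
have hU := chain_weight_U hj; have hV := chain_weight_V hj.
have g1 := nonint_weight_ge (Y i'); have g2 := nonint_weight_ge (Yt i').
have g3 := nonint_weight_ge (S i' j'.-1); have g4 := nonint_weight_ge (S i' j').
have oc1 := @foreign_weight_bound i' false j'.-1 j' hj1 hj2.
have oc2 := @foreign_weight_bound i' true j' j'.-1 hj2 hj1.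
move: oc1 oc2 => /= oc1 oc2.
case: hin => [<-|[<-|[<-|[<-|[<-|[<-|[]]]]]]] /=; rewrite ?cplx1_monom ?cplx2_monom mweight_monom;
  rewrite ?big_cons ?big_nil => /monom_neq_mem; rewrite !inE -?orbA ?orbF;
  (case/or3P => [/eqP->|/eqP->|/eqP->] || case/or4P => [/eqP->|/eqP->|/eqP->|/eqP->]);
  rewrite ?hY ?hYt ?hS1 ?hS2 ?hU ?hV;
  case: (eqVneq i' i) => [ei|ni]; (try subst i');
  rewrite ?nonint_weight_Y ?nonint_weight_Yt ?nonint_weight_S // in g1 g2 g3 g4 *;
  try (case: (U_weight_bounds hj) => *; lia); try (case: (V_weight_bounds hj) => *; lia);
  try (have := oc1 ni; lia); try (have := oc2 ni; lia); lia.
Qed.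

Lemma chain_weight_Y : chain_weight (Y i) = wy.
Proof. by rewrite chain_weight_nonint ?nonint_weight_Y //; exact: Y_nonint. Qed.
Lemma chain_weight_Yt : chain_weight (Yt i) = wt.
Proof. by rewrite chain_weight_nonint ?nonint_weight_Yt //; exact: Yt_nonint. Qed.
Lemma chain_weight_S x : (x <= L i)%N -> chain_weight (S i x) = ws x.
Proof. by move=> hx; rewrite chain_weight_nonint ?nonint_weight_S //; exact: S_nonint. Qed.
Lemma chain_weight_Ui x : (1 <= x <= L i)%N -> chain_weight (U i x) = wu x.
Proof. by move=> hx; rewrite chain_weight_U // eqxx. Qed.
Lemma chain_weight_Vi x : (1 <= x <= L i)%N -> chain_weight (V i x) = wv x.
Proof. by move=> hx; rewrite chain_weight_V // eqxx. Qed.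
End ChainWeight.

Definition chain_species t :=
  t = Y i \/ t = Yt i \/ (exists2 x, (x <= L i)%N & t = S i x) \/
  (exists2 x, (1 <= x <= L i)%N & t = U i x) \/ (exists2 x, (1 <= x <= L i)%N & t = V i x).

Lemma label_chain_species t : label t != (0, 0)%N -> chain_species t.
Proof.
rewrite /label; case: (eqVneq t (Y i)) => [->|_]; first by left.
case: (eqVneq t (Yt i)) => [->|_]; first by right; left.
case e: (S_index t) => [x|]; first by case: (S_index_Some e) => -> hx; right; right; left; exists x.
case e': (U_index t) => [x|]; first by case: (U_index_Some e') => -> hx; do 3 right; left; exists x.
case e'': (V_index t) => [x|]; last by rewrite eqxx.
by case: (V_index_Some e'') => -> hx; do 4 right; exists x.
Qed.

Lemma chain_species_nonint t : chain_species t -> is_nonint L Y Yt S t -> chain_nonint i t.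
Proof.
case=> [->|[->|[[x hx ->]|[[x hx ->]|[x hx ->]]]]] h.
- by left. - by right; left. - by right; right; exists x.
- by case: (inter_nonint_disjoint (U_inter hx) h).
- by case: (inter_nonint_disjoint (V_inter hx) h).
Qed.

(* No reaction of another chain can consume such a monomial ([totder_chain]);
   [Y i] and [Yt i] are not allowed together because another chain may bind
   one of them as a substrate with the other as its enzyme. *)
Definition chain_monomial (xs : seq T) :=
  all (fun x => label x != (0, 0)%N) xs && ~~ ((Y i \in xs) && (Yt i \in xs)).

Lemma chain_monomial_species xs t : chain_monomial xs -> t \in xs -> chain_species t.
Proof. by case/andP => /allP h _ /h; exact: label_chain_species. Qed.

Lemma foreign_inter_notin i' j' xs : chain_monomial xs -> i' != i -> (1 <= j' <= L i')%N ->
  U i' j' \notin xs /\ V i' j' \notin xs.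
Proof.
move=> hxs hi hj; split; apply/negP => /(chain_monomial_species hxs);
  case=> [e|[e|[[x hx e]|[[x hx e]|[x hx e]]]]].
- by case: (inter_nonint_disjoint (U_inter hj)); rewrite e; exact: Y_nonint.
- by case: (inter_nonint_disjoint (U_inter hj)); rewrite e; exact: Yt_nonint.
- by case: (inter_nonint_disjoint (U_inter hj)); rewrite e; exact: S_nonint.
- by case: (U_inj hj hx e) => ei; move: hi; rewrite ei eqxx.
- by case: (U_neq_V hj hx e).
- by case: (inter_nonint_disjoint (V_inter hj)); rewrite e; exact: Y_nonint.
- by case: (inter_nonint_disjoint (V_inter hj)); rewrite e; exact: Yt_nonint.
- by case: (inter_nonint_disjoint (V_inter hj)); rewrite e; exact: S_nonint.
- by case: (U_neq_V hx hj (esym e)).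
- by case: (V_inj hj hx e) => ei; move: hi; rewrite ei eqxx.
Qed.

Lemma foreign_cplx_notin i' b' x xs : chain_monomial xs -> i' != i -> (x <= L i')%N ->
  ~~ ((enz Y Yt i' b' \in xs) && (S i' x \in xs)).
Proof.
move=> hxs hi hx; apply/negP => /andP [h1 h2].
have c1 := chain_species_nonint (chain_monomial_species hxs h1) (enz_nonint i' b').
have c2 := chain_species_nonint (chain_monomial_species hxs h2) (S_nonint hx).
case/andP: hxs => _ /negP hn.
move: hi; rewrite (cplx2_chain hx c1 c2) ?eqxx // => [[e1 e2]|[e1 e2]]; apply: hn.
- by rewrite -e1 -e2 h1 h2.
- by rewrite -e1 -e2 h1 h2.
Qed.

Lemma foreign_reaction_coef_eq0 (k : rates N R) i' j' (xs : seq T) p :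
  chain_monomial xs -> i' != i -> (1 <= j' <= L i')%N ->
  forall r, List.In r (chain_reactions k i' j') -> reaction_coef r p (monom xs) = 0.
Proof.
move=> hxs hi hj.
have hj1 : (j'.-1 <= L i')%N by case/andP: hj => _ h; apply: leq_trans h; exact: leq_pred.
have hj2 : (j' <= L i')%N by case/andP: hj.
have [nu nv] := foreign_inter_notin hxs hi hj.
have b1 := foreign_cplx_notin false hxs hi hj1; have b2 := foreign_cplx_notin true hxs hi hj2.
move=> r; case=> [<-|[<-|[<-|[<-|[<-|[<-|[]]]]]]]; apply: reaction_coef_eq0 => /=;
  rewrite ?mle_cplx1 // ?mle_cplx2 //; exact: Y_neq_S || exact: Yt_neq_S.
Qed.

Lemma totder_chain (k : rates N R) p (xs : seq T) : chain_monomial xs ->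
  totder (network L Y Yt S U V k) p (monom xs) =
  \sum_(j <- iota 1 (L i)) \sum_(r <- chain_reactions k i j) reaction_coef r p (monom xs).
Proof.
move=> hxs; rewrite totder_sum sum_network (bigD1 i) //= [X in _ + X]big1 ?addr0 // => i' hi'.
rewrite big_seq big1 // => j; rewrite mem_iota => hj.
apply: big1_In => r hr; apply: (foreign_reaction_coef_eq0 p hxs hi' _ hr); lia.
Qed.

Lemma mle_U j (xs : seq T) : (1 <= j <= L i)%N ->
  mle (cplx1 (U i j)) (monom xs) = ((4, j)%N \in map label xs).
Proof. by move=> hj; rewrite mle_cplx1 mem_label ?label_U. Qed.
Lemma mle_V j (xs : seq T) : (1 <= j <= L i)%N ->
  mle (cplx1 (V i j)) (monom xs) = ((5, j)%N \in map label xs).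
Proof. by move=> hj; rewrite mle_cplx1 mem_label ?label_V. Qed.
Lemma mle_YS j (xs : seq T) : (1 <= j <= L i)%N ->
  mle (cplx2 (Y i) (S i j.-1)) (monom xs) =
  ((1, 0)%N \in map label xs) && ((3, j.-1)%N \in map label xs).
Proof.
move=> hj; have hj1 : (j.-1 <= L i)%N by case/andP: hj => _ h; apply: leq_trans h; exact: leq_pred.
by rewrite mle_cplx2 ?Y_neq_S // mem_label ?label_Y // mem_label ?label_S.
Qed.
Lemma mle_YtS j (xs : seq T) : (j <= L i)%N ->
  mle (cplx2 (Yt i) (S i j)) (monom xs) =
  ((2, 0)%N \in map label xs) && ((3, j)%N \in map label xs).
Proof. by move=> hj; rewrite mle_cplx2 ?Yt_neq_S // mem_label ?label_Yt // mem_label ?label_S. Qed.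

Lemma sum_chain_eq0 (g : nat -> R) : (forall j, (1 <= j <= L i)%N -> g j = 0) ->
  \sum_(j <- iota 1 (L i)) g j = 0.
Proof. move=> h; rewrite big_seq big1 // => j; rewrite mem_iota => hj; apply: h; lia. Qed.

Lemma sum_chain1 (g : nat -> R) j0 : (1 <= j0 <= L i)%N ->
  (forall j, (1 <= j <= L i)%N -> j != j0 -> g j = 0) ->
  \sum_(j <- iota 1 (L i)) g j = g j0.
Proof.
move=> hj0 h; rewrite (bigD1_seq j0) ?iota_uniq //=; last by rewrite mem_iota; lia.
rewrite big_seq_cond big1 ?addr0 // => j /andP [hj hne]; apply: h => //.
move: hj; rewrite mem_iota; lia.
Qed.

Lemma sum_chain2 (g : nat -> R) j0 j1 : (1 <= j0 <= L i)%N -> (1 <= j1 <= L i)%N -> j0 != j1 ->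
  (forall j, (1 <= j <= L i)%N -> j != j0 -> j != j1 -> g j = 0) ->
  \sum_(j <- iota 1 (L i)) g j = g j0 + g j1.
Proof.
move=> hj0 hj1 hne h.
have -> : \sum_(j <- iota 1 (L i)) g j =
  \sum_(j <- iota 1 (L i)) (if j == j0 then g j else 0) +
  \sum_(j <- iota 1 (L i)) (g j - if j == j0 then g j else 0).
  by rewrite -big_split /=; apply: eq_bigr => j _; rewrite addrC subrK.
rewrite (sum_chain1 (j0 := j0)) ?eqxx //; last by move=> j _ /negbTE ->.
rewrite (sum_chain1 (j0 := j1)) //; first by rewrite eq_sym (negbTE hne) subr0.
move=> j hj hj1'; case: (eqVneq j j0) => [->|hj0']; first by rewrite subrr.
by rewrite subr0; apply: h.
Qed.

Ltac case_ifs :=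
  repeat match goal with |- context [if ?b then _ else _] => case: (boolP b) => ? end.

Ltac chain_weight_bounds := first
  [ by move=> x hx; case_ifs; split; lia
  | by case=> [| |x|] //= hx; case_ifs; lia
  | by case=> [| |a|] [| |b|] [| |c|] //= ha hb hc _; case_ifs; lia ].

(* In each of the coefficient computations below, the monomial lies on the
   boundary [w s = mweight m + l] of [xder_weight] for one of the following
   weights, so that every contribution but the intended one vanishes. *)
Definition wS_desc (x : nat) : int := (2 * (L i + x))%N%:Z.
Definition wU_desc (x : nat) : int := (2 * (L i + x))%N%:Z - 1.
Definition weight_desc :=
  chain_weight 0 (2 * L i).+1%N%:Z (2 * L i).+2%N%:Z wS_desc wU_desc wU_desc.

Lemma weight_desc_admissible (k : rates N R) :
  weight_admissible weight_desc (network L Y Yt S U V k).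
Proof.
by apply: chain_weight_admissible; rewrite /wS_desc /wU_desc; chain_weight_bounds.
Qed.

Definition wS_Yt (x : nat) : int := if (x < L i)%N then -1 else 1.
Definition wU_Yt (x : nat) : int := if (x < L i)%N then -1 else 0.
Definition wV_Yt (x : nat) : int := if (x < L i)%N then -2 else 0.
Definition weight_Yt := chain_weight 0 (-1) 0 wS_Yt wU_Yt wV_Yt.

Lemma weight_Yt_admissible (k : rates N R) :
  weight_admissible weight_Yt (network L Y Yt S U V k).
Proof.
by apply: chain_weight_admissible; rewrite /wS_Yt /wU_Yt /wV_Yt; chain_weight_bounds.
Qed.

Definition wS_US (x : nat) : int := if (x < L i)%N then 0 else 2.
Definition wU_US (x : nat) : int := if (x < L i)%N then -1 else 1.
Definition wV_US (x : nat) : int := if (x < L i)%N then 0 else 1.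
Definition weight_US := chain_weight 0 0 0 wS_US wU_US wV_US.

Lemma weight_US_admissible (k : rates N R) :
  weight_admissible weight_US (network L Y Yt S U V k).
Proof.
by apply: chain_weight_admissible; rewrite /wS_US /wU_US /wV_US; chain_weight_bounds.
Qed.

Definition wS_S0 (x : nat) : int := if x == 0%N then -1 else if (x < L i)%N then 0 else 2.
Definition wU_S0 (x : nat) : int := if (x < L i)%N then -1 else 1.
Definition wV_S0 (x : nat) : int := if (x < L i)%N then 0 else 1.
Definition weight_S0 := chain_weight 0 1 1 wS_S0 wU_S0 wV_S0.

Lemma weight_S0_admissible (k : rates N R) : (2 <= L i)%N ->
  weight_admissible weight_S0 (network L Y Yt S U V k).
Proof.
move=> hL2; by apply: chain_weight_admissible; rewrite /wS_S0 /wU_S0 /wV_S0; chain_weight_bounds.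
Qed.

Lemma chain_monomialE (xs : seq T) : chain_monomial xs =
  all (fun p => p != (0, 0)%N) (map label xs) &&
  ~~ (((1, 0)%N \in map label xs) && ((2, 0)%N \in map label xs)).
Proof. by rewrite /chain_monomial all_map -label_Y -label_Yt -!mem_label ?label_Y ?label_Yt. Qed.

Section Coefficients.
Variable k : rates N R.
Local Notation rx := (network L Y Yt S U V k).
Local Notation s0 := (S i (L i)).

Ltac weight_arith :=
  rewrite !mweight_monom !big_cons !big_nil ?sumr_nseq;
  rewrite ?/weight_desc ?/weight_Yt ?/weight_US ?/weight_S0;
  rewrite ?chain_weight_Y ?chain_weight_Yt ?chain_weight_S ?chain_weight_Ui ?chain_weight_Vi;
  rewrite ?/wS_desc ?/wU_desc ?/wS_Yt ?/wU_Yt ?/wV_Yt ?/wS_US ?/wU_US ?/wV_US;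
  rewrite ?/wS_S0 ?/wU_S0 ?/wV_S0; case_ifs; try lia.

Lemma sum_chain_reactions j p m : \sum_(r <- chain_reactions k i j) reaction_coef r p m =
  (if mle (cplx2 (Y i) (S i j.-1)) m
   then reaction_coef (ka k i j, cplx2 (Y i) (S i j.-1), cplx1 (U i j)) p m else 0) +
  (if mle (cplx1 (U i j)) m
   then reaction_coef (kb k i j, cplx1 (U i j), cplx2 (Y i) (S i j.-1)) p m else 0) +
  (if mle (cplx1 (U i j)) m
   then reaction_coef (kc k i j, cplx1 (U i j), cplx2 (Y i) (S i j)) p m else 0) +
  (if mle (cplx2 (Yt i) (S i j)) m
   then reaction_coef (kat k i j, cplx2 (Yt i) (S i j), cplx1 (V i j)) p m else 0) +
  (if mle (cplx1 (V i j)) m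
   then reaction_coef (kbt k i j, cplx1 (V i j), cplx2 (Yt i) (S i j)) p m else 0) +
  (if mle (cplx1 (V i j)) m
   then reaction_coef (kct k i j, cplx1 (V i j), cplx2 (Yt i) (S i j.-1)) p m else 0).
Proof.
rewrite /chain_reactions !big_cons big_nil addr0 !addrA.
by rewrite -!reaction_coef_mle.
Qed.

Ltac label_simpl := rewrite ?map_cons ?map_nseq ?label_U ?label_V ?label_Y ?label_Yt ?label_S //=;
  rewrite ?inE ?mem_nseq ?xpair_eqE /= ?andbF ?andbT ?orbF ?orbT //=.

Ltac chain_step_simpl :=
  rewrite !mle_U ?mle_V ?mle_YS ?mle_YtS; try lia; label_simpl; rewrite ?eqxx ?orbT ?addr0 ?add0r.

Ltac other_steps_eq0 :=
  move=> j' hj' *; rewrite sum_chain_reactions;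
  rewrite mle_U ?mle_V ?mle_YS ?mle_YtS; try lia; label_simpl;
  repeat match goal with
  |- context [(?a == ?b)%N] => rewrite (_ : (a == b) = false); last by apply/eqP; lia end;
  by rewrite !addr0.

Definition desc_coef kk := xder rx (2 * kk) s0 (monom (S i (L i - kk) :: nseq kk (Y i))).

Lemma desc_coef0 : desc_coef 0 = 1.
Proof. by rewrite /desc_coef subn0 xder0_monom. Qed.

Lemma xder_desc_U kk : (kk < L i)%N ->
  xder rx (2 * kk).+1 s0 (monom (U i (L i - kk) :: nseq kk (Y i))) =
  kc k i (L i - kk) * desc_coef kk.
Proof.
rewrite /desc_coef => hk; set j := (L i - kk)%N.
have hj : (1 <= j <= L i)%N by rewrite /j; lia.
have hj1 : (j.-1 <= L i)%N by lia.
have hj2 : (j <= L i)%N by lia.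
have hv := weight_desc_admissible (k := k).
rewrite xderS totder_chain; last by rewrite chain_monomialE /= map_nseq label_U // label_Y
  all_nseq /= orbT /= !inE !mem_nseq /= !andbF.
rewrite (sum_chain1 (j0 := j)) //; last by other_steps_eq0.
rewrite sum_chain_reactions; chain_step_simpl.
have hle : mle (monom [:: U i j]) (monom (U i j :: nseq kk (Y i))).
  by rewrite -cplx1_monom mle_U //; label_simpl.
rewrite !reaction_coef_release //.
rewrite (shift_term_eq0 hv hle (s := Y i)); last by weight_arith.
rewrite (shift_term_eq0 hv hle (s := S i j.-1)); last by weight_arith.
rewrite (shift_term_eq0 hv hle (s := U i j)); last by weight_arith.
rewrite (@shift_termE _ _ _ _ (nseq kk (Y i)) (S i j) _ (perm_refl _)).
rewrite count_nseq /= (negbTE (Y_neq_S hj2)) mul0n.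
by rewrite !(add0r, subr0, mulr0, mul1r).
Qed.

Lemma xder_desc_V kk : (kk < L i)%N ->
  xder rx (2 * kk).+1 s0 (monom (V i (L i - kk) :: nseq kk (Y i))) =
  kbt k i (L i - kk) * desc_coef kk.
Proof.
rewrite /desc_coef => hk; set j := (L i - kk)%N.
have hj : (1 <= j <= L i)%N by rewrite /j; lia.
have hj1 : (j.-1 <= L i)%N by lia.
have hj2 : (j <= L i)%N by lia.
have hv := weight_desc_admissible (k := k).
rewrite xderS totder_chain; last by rewrite chain_monomialE /= map_nseq label_V // label_Y
  all_nseq /= orbT /= !inE !mem_nseq /= !andbF.
rewrite (sum_chain1 (j0 := j)) //; last by other_steps_eq0.
rewrite sum_chain_reactions; chain_step_simpl.
have hle : mle (monom [:: V i j]) (monom (V i j :: nseq kk (Y i))).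
  by rewrite -cplx1_monom mle_V //; label_simpl.
rewrite !reaction_coef_release //.
rewrite (shift_term_eq0 hv hle (s := Yt i)); last by weight_arith.
rewrite (shift_term_eq0 hv hle (s := S i j.-1)); last by weight_arith.
rewrite (shift_term_eq0 hv hle (s := V i j)); last by weight_arith.
rewrite (@shift_termE _ _ _ _ (nseq kk (Y i)) (S i j) _ (perm_refl _)).
rewrite count_nseq /= (negbTE (Y_neq_S hj2)) mul0n.
by rewrite !(add0r, addr0, subr0, mulr0, mul1r).
Qed.

Lemma xder_desc_S kk : (kk < L i)%N ->
  xder rx (2 * kk).+2 s0 (monom (S i (L i - kk.+1) :: nseq kk.+1 (Y i))) =
  ka k i (L i - kk) * xder rx (2 * kk).+1 s0 (monom (U i (L i - kk) :: nseq kk (Y i))).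
Proof.
move=> hk; set j := (L i - kk)%N.
have hj : (1 <= j <= L i)%N by rewrite /j; lia.
have hj1 : (j.-1 <= L i)%N by lia.
have hj2 : (j <= L i)%N by lia.
have -> : (L i - kk.+1 = j.-1)%N by rewrite /j; lia.
have hv := weight_desc_admissible (k := k).
rewrite xderS totder_chain; last by rewrite chain_monomialE /= map_nseq label_S // label_Y
  all_nseq /= orbT /= !inE !mem_nseq /= !andbF.
rewrite (sum_chain1 (j0 := j)) //; last by other_steps_eq0.
rewrite sum_chain_reactions; chain_step_simpl.
have hle : mle (monom [:: Y i; S i j.-1]) (monom [:: S i j.-1, Y i & nseq kk (Y i)]).
  by rewrite -cplx2_monom mle_YS //; label_simpl; rewrite eqxx.
rewrite !reaction_coef_bind // -[totder rx (xder rx (2 * kk) s0)]/(xder rx (2 * kk).+1 s0).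
rewrite (shift_term_eq0 hv hle (s := Y i)); last by weight_arith.
rewrite (shift_term_eq0 hv hle (s := S i j.-1)); last by weight_arith.
have hp : perm_eq [:: S i j.-1, Y i & nseq kk (Y i)] ([:: Y i; S i j.-1] ++ nseq kk (Y i)).
  by apply/permP => a /=; rewrite addnCA.
rewrite (@shift_termE _ _ _ _ (nseq kk (Y i)) (U i j) _ hp).
have hne : (Y i == U i j) = false.
  by rewrite eq_sym; exact: negbTE (inter_neq_nonint (U_inter hj) (Y_nonint i)).
rewrite count_nseq /= hne mul0n.
by rewrite !(add0r, addr0, subr0, mulr0, mul1r).
Qed.

Lemma desc_coefS kk : (kk < L i)%N ->
  desc_coef kk.+1 = ka k i (L i - kk) * (kc k i (L i - kk) * desc_coef kk).
Proof. by move=> hk; rewrite -xder_desc_U // -xder_desc_S // /desc_coef mulnS. Qed.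

Lemma desc_coef_gt0 kk : pos_rates L k -> (kk < L i)%N -> 0 < desc_coef kk.
Proof.
move=> pos; elim: kk => [|kk IH] hk; first by rewrite desc_coef0.
have hj : (1 <= L i - kk <= L i)%N by lia.
have [[a_gt0 _ c_gt0] _] := pos i _ hj.
by rewrite desc_coefS 1?ltnW // !mulr_gt0 // IH // ltnW.
Qed.

Lemma map_label_S (ids : seq nat) : all (fun x => x <= L i)%N ids ->
  map label (map (S i) ids) = map (fun x => (3, x)%N) ids.
Proof. by elim: ids => [|x ids IH] //= /andP [hx h]; rewrite label_S // IH. Qed.

Lemma mem_map_label_S c y (ids : seq nat) : c != 3%N ->
  (c, y) \in map (fun x => (3, x)%N) ids = false.
Proof. by move=> hc; apply/negbTE/mapP => [[x _ [e _]]]; move: hc; rewrite e. Qed.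

Lemma xder_substrates_eq0 l (ids : seq nat) : all (fun x => x <= L i)%N ids ->
  xder rx l.+1 s0 (monom (map (S i) ids)) = 0.
Proof.
move=> h; rewrite xderS totder_chain; last first.
  rewrite chain_monomialE map_label_S // (mem_map_label_S (c:=1%N)) //= andbT all_map.
  by apply/allP => x _.
apply: sum_chain_eq0 => j hj; rewrite sum_chain_reactions.
have hj1 : (j.-1 <= L i)%N by lia.
have hj2 : (j <= L i)%N by lia.
rewrite mle_U ?mle_V ?mle_YS ?mle_YtS // map_label_S //.
by rewrite !(mem_map_label_S (c:=1%N), mem_map_label_S (c:=2%N),
            mem_map_label_S (c:=4%N), mem_map_label_S (c:=5%N)) //= !addr0.
Qed.

Lemma mle_cplx2_single (a b x : T) : a != b -> mle (cplx2 a b) (monom [:: x]) = false.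
Proof.
move=> hab; rewrite mle_cplx2 // !inE; apply/negbTE/negP => /andP [/eqP e1 /eqP e2].
by subst; rewrite eqxx in hab.
Qed.

Lemma xder_single_eq0 l x : label x != (0, 0)%N -> is_nonint L Y Yt S x ->
  xder rx l.+1 s0 (monom [:: x]) = 0.
Proof.
move=> h0 hx; rewrite xderS totder_chain; last first.
  rewrite /chain_monomial /= h0 /= !inE; apply/negP => /andP [/eqP e1 /eqP e2].
  by move: (Y_neq_Yt i); rewrite e1 e2 eqxx.
apply: sum_chain_eq0 => j hj; rewrite sum_chain_reactions.
have hj1 : (j.-1 <= L i)%N by lia.
have hj2 : (j <= L i)%N by lia.
rewrite !mle_cplx2_single ?Y_neq_S ?Yt_neq_S // !mle_cplx1 !inE.
have -> : (U i j == x) = false by apply/negbTE/inter_neq_nonint => //; exact: U_inter.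
have -> : (V i j == x) = false by apply/negbTE/inter_neq_nonint => //; exact: V_inter.
by rewrite !addr0.
Qed.

Lemma xder1_U : xder rx 1 s0 (monom [:: U i (L i)]) = kc k i (L i).
Proof.
have := xder_desc_U (kk := 0) (L_gt0 i); rewrite !subn0 => ->.
by rewrite desc_coef0 mulr1.
Qed.

Lemma xder1_V : xder rx 1 s0 (monom [:: V i (L i)]) = kbt k i (L i).
Proof.
have := xder_desc_V (kk := 0) (L_gt0 i); rewrite !subn0 => ->.
by rewrite desc_coef0 mulr1.
Qed.

Lemma xder2_U : xder rx 2 s0 (monom [:: U i (L i)]) =
  - (kc k i (L i) * (kb k i (L i) + kc k i (L i))).
Proof.
have hj : (1 <= L i <= L i)%N by rewrite (L_gt0 i) leqnn.
have hj1 : ((L i).-1 <= L i)%N by exact: leq_pred.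
rewrite xderS totder_chain; last by rewrite chain_monomialE /= label_U.
rewrite (sum_chain1 (j0 := L i)) //; last by other_steps_eq0.
rewrite sum_chain_reactions; chain_step_simpl.
have hle : mle (monom [:: U i (L i)]) (monom [:: U i (L i)]) by apply/forallP => t.
rewrite !reaction_coef_release //.
rewrite !(@shift_termE _ _ [:: U i (L i)] [:: U i (L i)] [::] _ _ (perm_refl _)) /=.
rewrite -[totder rx (pvar R s0)]/(xder rx 1 s0) xder1_U.
rewrite !xder_single_eq0 ?label_Y ?label_S ?label_U //; try exact: Y_nonint; try exact: S_nonint.
by rewrite !(add0r, addr0, mul1r); ring.
Qed.

Lemma xder2_V : xder rx 2 s0 (monom [:: V i (L i)]) =
  - (kbt k i (L i) * (kbt k i (L i) + kct k i (L i))).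
Proof.
have hj : (1 <= L i <= L i)%N by rewrite (L_gt0 i) leqnn.
have hj1 : ((L i).-1 <= L i)%N by exact: leq_pred.
rewrite xderS totder_chain; last by rewrite chain_monomialE /= label_V.
rewrite (sum_chain1 (j0 := L i)) //; last by other_steps_eq0.
rewrite sum_chain_reactions; chain_step_simpl.
have hle : mle (monom [:: V i (L i)]) (monom [:: V i (L i)]) by apply/forallP => t.
rewrite !reaction_coef_release //.
rewrite !(@shift_termE _ _ [:: V i (L i)] [:: V i (L i)] [::] _ _ (perm_refl _)) /=.
rewrite -[totder rx (pvar R s0)]/(xder rx 1 s0) xder1_V.
rewrite !xder_single_eq0 ?label_Yt ?label_S ?label_V //; try exact: Yt_nonint; try exact: S_nonint.
by rewrite !(add0r, addr0, mul1r); ring.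
Qed.

Lemma xder1_YtS : xder rx 1 s0 (monom [:: Yt i; S i (L i)]) = - kat k i (L i).
Proof.
have hj : (1 <= L i <= L i)%N by rewrite (L_gt0 i) leqnn.
have hj1 : ((L i).-1 <= L i)%N by exact: leq_pred.
have hv := weight_Yt_admissible (k := k).
rewrite xderS totder_chain; last by rewrite chain_monomialE /= label_Yt label_S.
rewrite (sum_chain1 (j0 := L i)) //; last by other_steps_eq0.
rewrite sum_chain_reactions; chain_step_simpl.
have hle : mle (monom [:: Yt i; S i (L i)]) (monom [:: Yt i; S i (L i)]) by apply/forallP => t.
rewrite !reaction_coef_bind // -[pvar R s0]/(xder rx 0 s0).
rewrite (shift_term_eq0 hv hle (s := Yt i)); last by weight_arith.
rewrite (shift_term_eq0 hv hle (s := V i (L i))); last by weight_arith.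
rewrite (@shift_termE _ _ _ _ [::] (S i (L i)) _ (perm_refl _)) xder0_monom /=.
by rewrite !(add0r, addr0, subr0, mulr0, mul1r, sub0r) mulrN1.
Qed.

Lemma xder2_YtSS j : (1 <= j < L i)%N ->
  xder rx 2 s0 (monom [:: Yt i; S i (L i); S i j]) = kat k i (L i) * kat k i j.
Proof.
move=> hj0.
have hj : (1 <= j <= L i)%N by lia.
have hL : (1 <= L i <= L i)%N by rewrite (L_gt0 i) leqnn.
have hjL : (j <= L i)%N by lia.
have hv := weight_Yt_admissible (k := k).
rewrite xderS totder_chain; last by rewrite chain_monomialE /= label_Yt !label_S //= !inE
  xpair_eqE /=; lia.
have hne : L i != j by lia.
rewrite (sum_chain2 (j0 := L i) (j1 := j)) //; last by other_steps_eq0.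
rewrite !sum_chain_reactions; chain_step_simpl.
have hle1 : mle (monom [:: Yt i; S i (L i)]) (monom [:: Yt i; S i (L i); S i j]).
  by rewrite -cplx2_monom mle_YtS //; label_simpl; rewrite eqxx.
have hle2 : mle (monom [:: Yt i; S i j]) (monom [:: Yt i; S i (L i); S i j]).
  by rewrite -cplx2_monom mle_YtS //; label_simpl; rewrite eqxx orbT.
rewrite !reaction_coef_bind // -[totder rx (pvar R s0)]/(xder rx 1 s0).
rewrite (shift_term_eq0 hv hle1 (s := Yt i)); last by weight_arith.
rewrite (shift_term_eq0 hv hle1 (s := V i (L i))); last by weight_arith.
rewrite (shift_term_eq0 hv hle2 (s := V i j)); last by weight_arith.
rewrite (@shift_termE _ _ _ _ [:: S i j] (S i (L i)) _ (perm_refl _)).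
rewrite -[monom [:: S i (L i); S i j]]/(monom (map (S i) [:: L i; j])) xder_substrates_eq0;
  last by rewrite /= hjL leqnn.
have hp : perm_eq [:: Yt i; S i (L i); S i j] ([:: Yt i; S i j] ++ [:: S i (L i)]).
  by apply/permP => a /=; lia.
rewrite (@shift_termE _ _ _ _ [:: S i (L i)] (Yt i) _ hp).
rewrite (@shift_termE _ _ _ _ [:: S i (L i)] (S i j) _ hp).
rewrite xder1_YtS.
rewrite -[monom [:: S i j; S i (L i)]]/(monom (map (S i) [:: j; L i])) xder_substrates_eq0;
  last by rewrite /= hjL leqnn.
have hneq : (S i (L i) == Yt i) = false by rewrite eq_sym (negbTE (Yt_neq_S (leqnn _))).
rewrite /= hneq /=; ring.
Qed.

Lemma xder2_VS j : (1 <= j < L i)%N ->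
  xder rx 2 s0 (monom [:: V i j; S i (L i)]) = - ((kbt k i j + kct k i j) * kat k i (L i)).
Proof.
move=> hj0.
have hj : (1 <= j <= L i)%N by lia.
have hjL : (j <= L i)%N by lia.
have hj1 : (j.-1 <= L i)%N by lia.
have hv := weight_Yt_admissible (k := k).
rewrite xderS totder_chain; last by rewrite chain_monomialE /= label_V // label_S.
rewrite (sum_chain1 (j0 := j)) //; last by other_steps_eq0.
rewrite sum_chain_reactions; chain_step_simpl.
have hle : mle (monom [:: V i j]) (monom [:: V i j; S i (L i)]).
  by rewrite -cplx1_monom mle_V //; label_simpl.
rewrite !reaction_coef_release // -[totder rx (pvar R s0)]/(xder rx 1 s0).
rewrite (shift_term_eq0 hv hle (s := V i j)); last by weight_arith.
rewrite !(@shift_termE _ _ _ _ [:: S i (L i)] _ _ (perm_refl _)).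
rewrite xder1_YtS.
rewrite -[monom [:: S i j; S i (L i)]]/(monom (map (S i) [:: j; L i])) xder_substrates_eq0;
  last by rewrite /= hjL leqnn.
rewrite -[monom [:: S i j.-1; S i (L i)]]/(monom (map (S i) [:: j.-1; L i]))
  xder_substrates_eq0; last by rewrite /= hj1 leqnn.
have hneq : (S i (L i) == Yt i) = false by rewrite eq_sym (negbTE (Yt_neq_S (leqnn _))).
rewrite /= hneq /=; ring.
Qed.

Lemma xder3_US j : (1 <= j < L i)%N ->
  xder rx 3 s0 (monom [:: U i j; S i (L i).-1]) =
  (kb k i j + kc k i j) * desc_coef 1.
Proof.
rewrite /desc_coef subn1 => hj0.
have hj : (1 <= j <= L i)%N by lia.
have hjL : (j <= L i)%N by lia.
have hj1 : (j.-1 <= L i)%N by lia.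
have hL1 : ((L i).-1 <= L i)%N by lia.
have hv := weight_US_admissible (k := k).
rewrite xderS totder_chain; last by rewrite chain_monomialE /= label_U // label_S.
rewrite (sum_chain1 (j0 := j)) //; last by other_steps_eq0.
rewrite sum_chain_reactions; chain_step_simpl.
have hle : mle (monom [:: U i j]) (monom [:: U i j; S i (L i).-1]).
  by rewrite -cplx1_monom mle_U //; label_simpl.
rewrite !reaction_coef_release // -[totder rx (totder rx (pvar R s0))]/(xder rx 2 s0).
rewrite (shift_term_eq0 hv hle (s := U i j)); last by weight_arith.
rewrite !(@shift_termE _ _ _ _ [:: S i (L i).-1] _ _ (perm_refl _)).
rewrite -[monom [:: S i j; S i (L i).-1]]/(monom (map (S i) [:: j; (L i).-1]))
  xder_substrates_eq0; last by rewrite /= hjL hL1.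
rewrite -[monom [:: S i j.-1; S i (L i).-1]]/(monom (map (S i) [:: j.-1; (L i).-1]))
  xder_substrates_eq0; last by rewrite /= hj1 hL1.
rewrite (@monom_perm _ [:: Y i; S i (L i).-1] [:: S i (L i).-1; Y i]);
  last by apply/permP => a /=; lia.
have hneq : (S i (L i).-1 == Y i) = false by rewrite eq_sym (negbTE (Y_neq_S hL1)).
rewrite /= hneq /=; ring.
Qed.

Lemma xder2_US0_eq0 : (2 <= L i)%N -> xder rx 2 s0 (monom [:: U i (L i); S i 0]) = 0.
Proof.
move=> hL2.
have hj : (1 <= L i <= L i)%N by rewrite (L_gt0 i) leqnn.
have hL1 : ((L i).-1 <= L i)%N by lia.
have hv := weight_S0_admissible (k := k) hL2.
rewrite xderS totder_chain; last by rewrite chain_monomialE /= label_U // label_S.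
rewrite (sum_chain1 (j0 := L i)) //; last by other_steps_eq0.
rewrite sum_chain_reactions; chain_step_simpl.
have hle : mle (monom [:: U i (L i)]) (monom [:: U i (L i); S i 0]).
  by rewrite -cplx1_monom mle_U //; label_simpl.
rewrite !reaction_coef_release // -[totder rx (pvar R s0)]/(xder rx 1 s0).
rewrite (shift_term_eq0 hv hle (s := U i (L i))); last by weight_arith.
rewrite (shift_term_eq0 hv hle (s := Y i)); last by weight_arith.
rewrite (shift_term_eq0 hv hle (s := S i (L i).-1)); last by weight_arith.
rewrite !(@shift_termE _ _ _ _ [:: S i 0] _ _ (perm_refl _)).
rewrite -[monom [:: S i (L i); S i 0]]/(monom (map (S i) [:: L i; 0%N])) xder_substrates_eq0;
  last by rewrite /= leqnn.
by rewrite !(mulr0, addr0, add0r, subr0).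
Qed.

Lemma xder3_YSS0 : (2 <= L i)%N ->
  xder rx 3 s0 (monom [:: Y i; S i (L i).-1; S i 0]) =
  - (ka k i 1 * desc_coef 1).
Proof.
rewrite /desc_coef subn1 => hL2.
have hj : (1 <= L i <= L i)%N by rewrite (L_gt0 i) leqnn.
have h1 : (1 <= 1 <= L i)%N by lia.
have hL1 : ((L i).-1 <= L i)%N by lia.
have hv := weight_S0_admissible (k := k) hL2.
have hne : L i != 1%N by lia.
rewrite xderS totder_chain; last by rewrite chain_monomialE /= label_Y !label_S //= !inE /=.
rewrite (sum_chain2 (j0 := L i) (j1 := 1%N)) //; last by other_steps_eq0.
rewrite !sum_chain_reactions; chain_step_simpl.
have hle1 : mle (monom [:: Y i; S i (L i).-1]) (monom [:: Y i; S i (L i).-1; S i 0]).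
  by rewrite -cplx2_monom mle_YS //; label_simpl; rewrite eqxx.
have hle2 : mle (monom [:: Y i; S i 0]) (monom [:: Y i; S i (L i).-1; S i 0]).
  by rewrite -[monom [:: Y i; S i 0]]/(monom [:: Y i; S i (1%N).-1]) -cplx2_monom mle_YS //;
    label_simpl; rewrite eqxx orbT.
rewrite !reaction_coef_bind // -[totder rx (totder rx (pvar R s0))]/(xder rx 2 s0).
rewrite (shift_term_eq0 hv hle1 (s := Y i)); last by weight_arith.
rewrite (shift_term_eq0 hv hle1 (s := S i (L i).-1)); last by weight_arith.
rewrite (shift_term_eq0 hv hle2 (s := U i 1)); last by weight_arith.
rewrite (shift_term_eq0 hv hle2 (s := S i 0)); last by weight_arith.
rewrite (@shift_termE _ _ _ _ [:: S i 0] (U i (L i)) _ (perm_refl _)) xder2_US0_eq0 //.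
have hp : perm_eq [:: Y i; S i (L i).-1; S i 0] ([:: Y i; S i 0] ++ [:: S i (L i).-1]).
  by apply/permP => a /=; lia.
rewrite (@shift_termE _ _ _ _ [:: S i (L i).-1] (Y i) _ hp).
rewrite (@monom_perm _ [:: Y i; S i (L i).-1] [:: S i (L i).-1; Y i]);
  last by apply/permP => a /=; lia.
have hneq : (S i (L i).-1 == Y i) = false by rewrite eq_sym (negbTE (Y_neq_S hL1)).
rewrite /= hneq /=; ring.
Qed.

End Coefficients.

Section Identification.
Variables k1 k2 : rates N R.
Hypotheses (pos1 : pos_rates L k1) (pos2 : pos_rates L k2).
Local Notation coef k l xs := (xder (network L Y Yt S U V k) l (S i (L i)) (monom xs)).
Hypothesis coef_eq : forall l, (1 <= l <= maxn 2 (2 * L i - 1))%N -> forall m,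
  xder (network L Y Yt S U V k1) l (S i (L i)) m =
  xder (network L Y Yt S U V k2) l (S i (L i)) m.

Lemma desc_coef_eq kk : (kk < L i)%N -> desc_coef k1 kk = desc_coef k2 kk.
Proof.
case: kk => [_|kk hk]; first by rewrite !desc_coef0.
by apply: coef_eq; lia.
Qed.

Lemma desc_coef_neq0 kk : (kk < L i)%N -> desc_coef k2 kk != 0.
Proof. by move=> hk; rewrite -desc_coef_eq // lt0r_neq0 // desc_coef_gt0. Qed.

Lemma kc_eq j : (1 <= j <= L i)%N -> kc k1 i j = kc k2 i j.
Proof.
move=> hj; have hk : (L i - j < L i)%N by lia.
have h : coef k1 (2 * (L i - j)).+1 (U i (L i - (L i - j)) :: nseq (L i - j) (Y i)) =
         coef k2 (2 * (L i - j)).+1 (U i (L i - (L i - j)) :: nseq (L i - j) (Y i)).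
  by apply: coef_eq; lia.
rewrite !xder_desc_U // desc_coef_eq // subKn in h; last by case/andP: hj.
by apply: (mulIf (desc_coef_neq0 hk)).
Qed.

Lemma kbt_eq j : (1 <= j <= L i)%N -> kbt k1 i j = kbt k2 i j.
Proof.
move=> hj; have hk : (L i - j < L i)%N by lia.
have h : coef k1 (2 * (L i - j)).+1 (V i (L i - (L i - j)) :: nseq (L i - j) (Y i)) =
         coef k2 (2 * (L i - j)).+1 (V i (L i - (L i - j)) :: nseq (L i - j) (Y i)).
  by apply: coef_eq; lia.
rewrite !xder_desc_V // desc_coef_eq // subKn in h; last by case/andP: hj.
by apply: (mulIf (desc_coef_neq0 hk)).
Qed.

(* The descent coefficient of order 2 (L - j) + 2 is available only when
   j >= 2 or L = 1; the remaining case j = 1 < L uses an order-3 coefficient. *)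
Lemma ka_eq j : (1 <= j <= L i)%N -> ka k1 i j = ka k2 i j.
Proof.
move=> hj; case: (boolP ((2 <= j)%N || (L i == 1%N))) => hcase.
  have hk : (L i - j < L i)%N by lia.
  have h : coef k1 (2 * (L i - j)).+2 (S i (L i - (L i - j).+1) :: nseq (L i - j).+1 (Y i)) =
           coef k2 (2 * (L i - j)).+2 (S i (L i - (L i - j).+1) :: nseq (L i - j).+1 (Y i)).
    by apply: coef_eq; case/orP: hcase => [|/eqP]; lia.
  rewrite !xder_desc_S // !xder_desc_U // desc_coef_eq // subKn in h; last by case/andP: hj.
  rewrite kc_eq // in h; apply: mulIf h.
  have [[_ _ c_gt0] _] := pos2 hj.
  by rewrite mulf_neq0 ?lt0r_neq0 // -desc_coef_eq // desc_coef_gt0.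
have [-> hL2] : j = 1%N /\ (1 < L i)%N by move: hcase; rewrite negb_or; lia.
have h : coef k1 3 [:: Y i; S i (L i).-1; S i 0] = coef k2 3 [:: Y i; S i (L i).-1; S i 0].
  by apply: coef_eq; lia.
rewrite !xder3_YSS0 // desc_coef_eq // in h.
apply: (mulIf (desc_coef_neq0 hL2)); exact: oppr_inj.
Qed.

Lemma kb_eq j : (1 <= j <= L i)%N -> kb k1 i j = kb k2 i j.
Proof.
move=> hj; case: (eqVneq j (L i)) => [->|hjL].
  have h : coef k1 2 [:: U i (L i)] = coef k2 2 [:: U i (L i)] by apply: coef_eq; lia.
  have hL : (1 <= L i <= L i)%N by rewrite L_gt0 leqnn.
  have [[_ _ c_gt0] _] := pos1 hL.
  rewrite !xder2_U // kc_eq // in h c_gt0.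
  apply: (addIr (kc k2 i (L i))); apply: (mulfI (lt0r_neq0 c_gt0)); exact: oppr_inj.
have hL2 : (1 < L i)%N by lia.
have h : coef k1 3 [:: U i j; S i (L i).-1] = coef k2 3 [:: U i j; S i (L i).-1].
  by apply: coef_eq; lia.
rewrite !xder3_US ?desc_coef_eq ?kc_eq // in h; try lia.
apply: (addIr (kc k2 i j)); exact: (mulIf (desc_coef_neq0 hL2)).
Qed.

Lemma kat_eq_last : kat k1 i (L i) = kat k2 i (L i).
Proof.
have h : coef k1 1 [:: Yt i; S i (L i)] = coef k2 1 [:: Yt i; S i (L i)] by apply: coef_eq; lia.
by rewrite !xder1_YtS in h; exact: oppr_inj h.
Qed.

Lemma kat_eq j : (1 <= j <= L i)%N -> kat k1 i j = kat k2 i j.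
Proof.
move=> hj; case: (eqVneq j (L i)) => [->|hjL]; first exact: kat_eq_last.
have h : coef k1 2 [:: Yt i; S i (L i); S i j] = coef k2 2 [:: Yt i; S i (L i); S i j].
  by apply: coef_eq; lia.
have hL : (1 <= L i <= L i)%N by rewrite L_gt0 leqnn.
have [_ [at_gt0 _ _]] := pos2 hL.
rewrite !xder2_YtSS ?kat_eq_last // in h; try lia.
by apply: (mulfI (lt0r_neq0 at_gt0)).
Qed.

Lemma kct_eq j : (1 <= j <= L i)%N -> kct k1 i j = kct k2 i j.
Proof.
move=> hj; case: (eqVneq j (L i)) => [->|hjL].
  have h : coef k1 2 [:: V i (L i)] = coef k2 2 [:: V i (L i)] by apply: coef_eq; lia.
  have hL : (1 <= L i <= L i)%N by rewrite L_gt0 leqnn.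
  have [_ [_ bt_gt0 _]] := pos1 hL.
  rewrite !xder2_V // kbt_eq // in h bt_gt0.
  apply: (addrI (kbt k2 i (L i))); apply: (mulfI (lt0r_neq0 bt_gt0)); exact: oppr_inj.
have h : coef k1 2 [:: V i j; S i (L i)] = coef k2 2 [:: V i j; S i (L i)] by apply: coef_eq; lia.
have hL : (1 <= L i <= L i)%N by rewrite L_gt0 leqnn.
have [_ [at_gt0 _ _]] := pos2 hL.
rewrite !xder2_VS ?kat_eq_last ?kbt_eq // in h; try lia.
apply: (addrI (kbt k2 i j)); apply: (mulIf (lt0r_neq0 at_gt0)); exact: oppr_inj.
Qed.

End Identification.

End Chain.
End Network.

Theorem mainTheorem4 (R : realFieldType) (T : finType) (N : nat)
  (L : 'I_N -> nat) (Y Yt : 'I_N -> T) (S U V : 'I_N -> nat -> T) :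
  (forall t : T, is_inter L U V t \/ is_nonint L Y Yt S t) ->
  H1 L Y Yt S U V ->
  H2 L Y Yt S U V ->
  forall k1 k2 : rates N R,
  pos_rates L k1 -> pos_rates L k2 ->
  (forall (i : 'I_N) (l : nat), (1 <= l <= maxn 2 (2 * L i - 1))%N ->
     forall m : T -> nat,
       xder (network L Y Yt S U V k1) l (S i (L i)) m =
       xder (network L Y Yt S U V k2) l (S i (L i)) m) ->
  eq_rates L k1 k2.
Proof.
move=> _ hH1 hH2 k1 k2 pos1 pos2 coef_eq i j hj.
have {}coef_eq := coef_eq i.
by split; split; [apply: (ka_eq hH1 hH2)|apply: (kb_eq hH1 hH2)|apply: (kc_eq hH1 hH2)
                |apply: (kat_eq hH1 hH2)|apply: (kbt_eq hH1 hH2)|apply: (kct_eq hH1 hH2)].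
Qed.
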